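(* Let $f(u,\bar u)=\sum_{\nu,\mu}c_{\nu,\mu}u^\nu\bar u^\mu$ be a mixed polynomial in one complex variable $u$. (1) If $f$ is admissible at infinity and its zero set $V(f)=\{\alpha\in\mathbb C: f(\alpha,\bar\alpha)=0\}$ is finite, then $\operatorname{SM}(f)=\beta(f)$. (2) If $f$ is admissible at the origin and $f(0,0)=0$, then $\operatorname{sm}(f,0)=\rho(f,0)$.
   Context: Let $\bar d=\max\{\nu+\mu: c_{\nu,\mu}\ne0\}$ and $\underline d=\min\{\nu+\mu:c_{\nu,\mu}\ne0\}$, and for $\ell\ge0$ let $f_\ell=\sum_{\nu+\mu=\ell}c_{\nu,\mu}u^\nu\bar u^\mu$. There are unique factorizations $f_{\bar d}(u,\bar u)=c\,u^p\bar u^q\prod_{j=1}^s(u+\gamma_j\bar u)^{\nu_j}$ with $c\ne0$, $p,q\ge0$, $\nu_j\ge1$, $p+q+\sum\nu_j=\bar d$, and $\gamma_1,\dots,\gamma_s$ distinct non-zero complex numbers; and $f_{\underline d}(u,\bar u)=c'u^{a}\bar u^{b}\prod_{j=1}^{s'}(u+\delta_j\bar u)^{\mu_j}$ with $c'\ne0$, $a+b+\sum\mu_j=\underline d$, $\delta_1,\dots,\delta_{s'}$ distinct non-zero complex numbers. $f$ is admissible at infinity if $|\gamma_j|\ne1$ for all $j$, and admissible at the origin if $|\delta_j|\ne1$ for all $j$. For non-zero $\xi\in\mathbb C$ let $\varepsilon(\xi)=1$ if $|\xi|<1$, $0$ if $|\xi|=1$, $-1$ if $|\xi|>1$. Define $\beta(f)=p-q+\sum_{j=1}^s\varepsilon(\gamma_j)\nu_j$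 and $\rho(f,0)=a-b+\sum_{j=1}^{s'}\varepsilon(\delta_j)\mu_j$. For an isolated root $\alpha$ of $f$, $\operatorname{sm}(f,\alpha)$ is the mapping degree of $f/|f|:\{|u-\alpha|=r\}\to S^1$ for small $r>0$ (circle oriented counterclockwise), and $\operatorname{SM}(f)=\sum_{\alpha\in V(f)}\operatorname{sm}(f,\alpha)$. *)

From Stdlib Require Import Reals ZArith List ClassicalEpsilon.
From Coquelicot Require Import Coquelicot.
Import ListNotations.
Open Scope R_scope.

(** A mixed polynomial f(u, ubar) = sum c_{nu,mu} u^nu ubar^mu, with
    coefficients c : nat -> nat -> C supported in [0..N] x [0..N]. *)
Definition mixed_supported (c : nat -> nat -> C) (N : nat) : Prop :=
  forall nu mu, (N < nu)%nat \/ (N < mu)%nat -> c nu mu = RtoC 0.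

Fixpoint csum (n : nat) (F : nat -> C) : C :=
  match n with
  | O => F O
  | S k => Cplus (csum k F) (F (S k))
  end.

Definition feval (c : nat -> nat -> C) (N : nat) (u : C) : C :=
  csum N (fun nu => csum N (fun mu =>
     Cmult (c nu mu) (Cmult (Cpow u nu) (Cpow (Cconj u) mu)))).

Definition fhom (c : nat -> nat -> C) (N : nat) (l : nat) (u : C) : C :=
  csum N (fun nu => csum N (fun mu =>
     if Nat.eqb (nu + mu) l
     then Cmult (c nu mu) (Cmult (Cpow u nu) (Cpow (Cconj u) mu))
     else RtoC 0)).

Definition is_top_degree (c : nat -> nat -> C) (d : nat) : Prop :=
  (exists nu mu, (nu + mu)%nat = d /\ c nu mu <> RtoC 0) /\
  (forall nu mu, c nu mu <> RtoC 0 -> (nu + mu <= d)%nat).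

Definition is_bottom_degree (c : nat -> nat -> C) (d : nat) : Prop :=
  (exists nu mu, (nu + mu)%nat = d /\ c nu mu <> RtoC 0) /\
  (forall nu mu, c nu mu <> RtoC 0 -> (d <= nu + mu)%nat).

(** a factorization  k u^p ubar^q prod_j (u + g_j ubar)^{n_j}, with the
    data (g_j, n_j) listed in fac *)
Definition factored (k : C) (p q : nat) (fac : list (C * nat)%type) (u : C) : C :=
  Cmult (Cmult k (Cmult (Cpow u p) (Cpow (Cconj u) q)))
    (fold_right (fun gn acc =>
        Cmult (Cpow (Cplus u (Cmult (fst gn) (Cconj u))) (snd gn)) acc)
      (RtoC 1) fac).

Definition valid_factorization (k : C) (fac : list (C * nat)%type) : Prop :=
  k <> RtoC 0 /\ NoDup (map fst fac) /\
  List.Forall (fun gn => fst gn <> RtoC 0 /\ (1 <= snd gn)%nat) fac.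

Definition admissible_fac (fac : list (C * nat)%type) : Prop :=
  List.Forall (fun gn => Cmod (fst gn) <> 1) fac.

Definition eps (xi : C) : Z :=
  match Rlt_dec (Cmod xi) 1 with
  | left _ => 1%Z
  | right _ => match Rgt_dec (Cmod xi) 1 with
               | left _ => (-1)%Z
               | right _ => 0%Z
               end
  end.

(** p - q + sum_j eps(g_j) n_j : this is beta(f) (resp. rho(f,0)) for the
    factorization of f_dbar (resp. f_dlow) *)
Definition index_of_fac (p q : nat) (fac : list (C * nat)%type) : Z :=
  (Z.of_nat p - Z.of_nat q +
   fold_right (fun gn acc => (eps (fst gn) * Z.of_nat (snd gn) + acc)%Z) 0%Z fac)%Z.

Definition circ (a : C) (r t : R) : C :=
  Cplus a (Cmult (RtoC r) (cos (2 * PI * t), sin (2 * PI * t))).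

(** g/|g| restricted to the circle |u - a| = r has mapping degree d:
    g does not vanish on the circle, and g/|g| admits a continuous angle
    lift th with total increase 2 pi d. *)
Definition circle_degree (g : C -> C) (a : C) (r : R) (d : Z) : Prop :=
  (forall t, 0 <= t <= 1 -> g (circ a r t) <> RtoC 0) /\
  exists th : R -> R,
    (forall t, continuity_pt th t) /\
    (forall t, 0 <= t <= 1 ->
       g (circ a r t) = Cmult (RtoC (Cmod (g (circ a r t)))) (cos (th t), sin (th t))) /\
    th 1 - th 0 = 2 * PI * IZR d.

Definition has_sm (g : C -> C) (a : C) (k : Z) : Prop :=
  exists r0, 0 < r0 /\ forall r, 0 < r < r0 -> circle_degree g a r k.

Definition sm (g : C -> C) (a : C) : Z :=
  epsilon (inhabits 0%Z) (has_sm g a).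

Definition SM (g : C -> C) (V : list C) : Z :=
  fold_right (fun a acc => (sm g a + acc)%Z) 0%Z V.

From Stdlib Require Import Reals ZArith List Lra Lia ClassicalEpsilon FunctionalExtensionality.
From Coquelicot Require Import Coquelicot.
Import ListNotations.
Open Scope R_scope.

(* Local degrees are computed as total variations of a continuous argument
   along paths; such an argument is built by chaining arctangents of
   quotients of nearby values.  The variation around the boundary of a
   rectangle is additive under subdivision and vanishes on zero-free
   rectangles, while around a small square containing a single zero it is
   2 pi sm (the square and small circles are homotopic in the punctured
   square).  Hence the variation around any rectangle is 2 pi times the sum of
   the local degrees of the zeros inside.
   For (1), on the boundary of a large square |f - f_dbar| < |f_dbar|, so by
   Rouché the zeros count the degree of f_dbar, which is read off the
   factorisation on a circle: u^p ubar^q contributes p - q, and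
   u + gamma ubar winds like u or like gamma ubar according as |gamma| < 1 or
   |gamma| > 1, whence eps(gamma).  For (2), f_dlow dominates on small
   circles around 0. *)

(** * Continuous arguments *)

Definition cis (t : R) : C := (cos t, sin t).

Lemma C_ext (u v : C) : fst u = fst v -> snd u = snd v -> u = v.
Proof. destruct u, v; simpl; intros; subst; auto. Qed.

Lemma cis_add a b : cis (a + b) = Cmult (cis a) (cis b).
Proof. unfold cis, Cmult; apply C_ext; simpl; [rewrite cos_plus|rewrite sin_plus]; ring. Qed.

Lemma Cmod_cis t : Cmod (cis t) = 1.
Proof. unfold Cmod, cis; cbn [fst snd]. replace (cos t ^ 2 + sin t ^ 2) with 1.
 apply sqrt_1. rewrite <- (sin2_cos2 t). unfold Rsqr; ring. Qed.

Lemma Cmod_mul_self (z : C) : Cmod z * Cmod z = fst z * fst z + snd z * snd z.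
Proof. unfold Cmod. rewrite sqrt_sqrt. simpl; ring. simpl; nra. Qed.

Lemma Cmod_lt_sqr (u v : C) : Cmod u < Cmod v ->
  fst u * fst u + snd u * snd u < fst v * fst v + snd v * snd v.
Proof. intros H. rewrite <- !Cmod_mul_self. pose proof (Cmod_ge_0 u). nra. Qed.

Lemma Rabs_fst_le_Cmod (z : C) : Rabs (fst z) <= Cmod z.
Proof. pose proof (Cmod_mul_self z). pose proof (Cmod_ge_0 z). apply Rabs_le; split; nra. Qed.
Lemma Rabs_snd_le_Cmod (z : C) : Rabs (snd z) <= Cmod z.
Proof. pose proof (Cmod_mul_self z). pose proof (Cmod_ge_0 z). apply Rabs_le; split; nra. Qed.

Lemma Cmod_le_Rabs_sum (z : C) : Cmod z <= Rabs (fst z) + Rabs (snd z).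
Proof.
  pose proof (Cmod_ge_0 z). pose proof (Rabs_pos (fst z)). pose proof (Rabs_pos (snd z)).
  assert (Cmod z * Cmod z <= (Rabs (fst z) + Rabs (snd z)) * (Rabs (fst z) + Rabs (snd z))).
  { rewrite Cmod_mul_self. pose proof (Rsqr_abs (fst z)). pose proof (Rsqr_abs (snd z)).
    unfold Rsqr in *. nra. }
  nra.
Qed.

Lemma cis_eq_cis a b : cis a = cis b -> exists k : Z, a - b = 2 * PI * IZR k.
Proof.
  unfold cis; intros H. inversion H as [[Hc Hs]].
  set (d := a - b).
  assert (Hcd : cos d = 1).
  { unfold d. rewrite cos_minus, Hc, Hs. rewrite <- (sin2_cos2 b). unfold Rsqr; ring. }
  assert (Hsd : sin (d/2) = 0).
  { assert (cos (2 * (d/2)) = 1) by (replace (2*(d/2)) with d by field; auto).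
    rewrite cos_2a_sin in H0. nra. }
  destruct (sin_eq_0_0 _ Hsd) as [k Hk]. exists k. lra.
Qed.

Lemma continuity_pt_eps_delta (h : R -> R) t :
  (forall e, 0 < e -> exists d, 0 < d /\ forall s, Rabs (s - t) < d -> Rabs (h s - h t) < e) ->
  continuity_pt h t.
Proof.
  intros H e He. destruct (H e He) as [d [Hd Hs]]. exists d; split; auto.
  intros x [_ Hx]. simpl in *. unfold R_dist in *. apply Hs; auto.
Qed.

Lemma eps_delta_continuity_pt (h : R -> R) t : continuity_pt h t ->
  forall e, 0 < e -> exists d, 0 < d /\ forall s, Rabs (s - t) < d -> Rabs (h s - h t) < e.
Proof.
  intros H e He. destruct (H e He) as [d [Hd Hs]]. exists d; split; auto.
  intros s Hst. destruct (Req_dec s t) as [->|Hne].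
  - rewrite Rminus_eq_0, Rabs_R0; auto.
  - apply (Hs s). split. split; [exact I| congruence]. simpl. unfold R_dist. auto.
Qed.

Definition ccontinuity_pt (g : R -> C) (t : R) : Prop :=
  forall e, 0 < e -> exists d, 0 < d /\ forall s, Rabs (s - t) < d -> Cmod (Cminus (g s) (g t)) < e.

Definition ccontinuous (g : R -> C) := forall t, ccontinuity_pt g t.

Lemma ccontinuity_pt_fst g t : ccontinuity_pt g t -> continuity_pt (fun s => fst (g s)) t.
Proof. intros H. apply continuity_pt_eps_delta. intros e He. destruct (H e He) as [d [Hd Hs]].
  exists d; split; auto. intros s Hs'. eapply Rle_lt_trans; [|apply (Hs s Hs')].
  replace (fst (g s) - fst (g t)) with (fst (Cminus (g s) (g t))) by (simpl; ring).
    apply Rabs_fst_le_Cmod. Qed.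
Lemma ccontinuity_pt_snd g t : ccontinuity_pt g t -> continuity_pt (fun s => snd (g s)) t.
Proof. intros H. apply continuity_pt_eps_delta. intros e He. destruct (H e He) as [d [Hd Hs]].
  exists d; split; auto. intros s Hs'. eapply Rle_lt_trans; [|apply (Hs s Hs')].
  replace (snd (g s) - snd (g t)) with (snd (Cminus (g s) (g t))) by (simpl; ring).
    apply Rabs_snd_le_Cmod. Qed.

Lemma ccontinuity_pt_pair g t : continuity_pt (fun s => fst (g s)) t ->
  continuity_pt (fun s => snd (g s)) t -> ccontinuity_pt g t.
Proof.
  intros H1 H2 e He.
  destruct (eps_delta_continuity_pt _ _ H1 (e/2)) as [d1 [Hd1 Hs1]]; [lra|].
  destruct (eps_delta_continuity_pt _ _ H2 (e/2)) as [d2 [Hd2 Hs2]]; [lra|].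
  exists (Rmin d1 d2); split. apply Rmin_pos; auto.
  intros s Hs. eapply Rle_lt_trans. apply Cmod_le_Rabs_sum.
  simpl. pose proof (Hs1 s ltac:(eapply Rlt_le_trans; [apply Hs|apply Rmin_l])).
  pose proof (Hs2 s ltac:(eapply Rlt_le_trans; [apply Hs|apply Rmin_r])).
  replace (fst (g s) + - fst (g t)) with (fst (g s) - fst (g t)) by ring.
  replace (snd (g s) + - snd (g t)) with (snd (g s) - snd (g t)) by ring. lra.
Qed.

Lemma continuity_pt_Cmod g t : ccontinuity_pt g t -> continuity_pt (fun s => Cmod (g s)) t.
Proof. intros H. apply continuity_pt_eps_delta. intros e He. destruct (H e He) as [d [Hd Hs]].
  exists d; split; auto. intros s Hs'. eapply Rle_lt_trans; [|apply (Hs s Hs')].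
  pose proof (Cmod_triangle (Cminus (g s) (g t)) (g t)).
  pose proof (Cmod_triangle (Cminus (g t) (g s)) (g s)).
  replace (Cplus (Cminus (g s) (g t)) (g t)) with (g s) in H0 by ring.
  replace (Cplus (Cminus (g t) (g s)) (g s)) with (g t) in H1 by ring.
  replace (Cminus (g t) (g s)) with (Copp (Cminus (g s) (g t))) in H1 by ring.
  rewrite Cmod_opp in H1. apply Rabs_le. lra. Qed.

Lemma Cmod_sub_triangle (u v w : C) : Cmod (Cminus u w) <= Cmod (Cminus u v) + Cmod (Cminus v w).
Proof. replace (Cminus u w) with (Cplus (Cminus u v) (Cminus v w)) by ring. apply Cmod_triangle. Qed.

Lemma ccontinuity_pt_const (z : C) t : ccontinuity_pt (fun _ => z) t.
Proof. intros e He. exists 1; split; [lra|]. intros s _. replace (Cminus z z) with (RtoC 0) by ring.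
  rewrite Cmod_0; auto. Qed.

Lemma ccontinuity_pt_plus g h t : ccontinuity_pt g t -> ccontinuity_pt h t ->
  ccontinuity_pt (fun s => Cplus (g s) (h s)) t.
Proof.
  intros H1 H2 e He.
  destruct (H1 (e/2)) as [d1 [Hd1 Hs1]]; [lra|].
  destruct (H2 (e/2)) as [d2 [Hd2 Hs2]]; [lra|].
  exists (Rmin d1 d2); split. apply Rmin_pos; auto.
  intros s Hs. replace (Cminus (Cplus (g s) (h s)) (Cplus (g t) (h t))) with
    (Cplus (Cminus (g s) (g t)) (Cminus (h s) (h t))) by ring.
  eapply Rle_lt_trans. apply Cmod_triangle.
  pose proof (Hs1 s ltac:(eapply Rlt_le_trans; [apply Hs|apply Rmin_l])).
  pose proof (Hs2 s ltac:(eapply Rlt_le_trans; [apply Hs|apply Rmin_r])). lra.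
Qed.

Lemma ccontinuity_pt_conj g t : ccontinuity_pt g t -> ccontinuity_pt (fun s => Cconj (g s)) t.
Proof. intros H e He. destruct (H e He) as [d [Hd Hs]]. exists d; split; auto.
  intros s Hs'. replace (Cminus (Cconj (g s)) (Cconj (g t))) with (Cconj (Cminus (g s) (g t))).
  rewrite Cmod_conj; auto. apply C_ext; simpl; ring. Qed.

Lemma ccontinuity_pt_mult g h t : ccontinuity_pt g t -> ccontinuity_pt h t ->
  ccontinuity_pt (fun s => Cmult (g s) (h s)) t.
Proof.
  intros H1 H2 e He.
  set (K := Cmod (g t) + Cmod (h t) + 2).
  assert (HK : 0 < K) by (unfold K; pose proof (Cmod_ge_0 (g t)); pose proof (Cmod_ge_0 (h t)); lra).
  set (e1 := Rmin 1 (e / K)).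
  assert (He1 : 0 < e1) by (apply Rmin_pos; [lra| apply Rdiv_lt_0_compat; auto]).
  destruct (H1 e1 He1) as [d1 [Hd1 Hs1]].
  destruct (H2 e1 He1) as [d2 [Hd2 Hs2]].
  exists (Rmin d1 d2); split. apply Rmin_pos; auto.
  intros s Hs.
  pose proof (Hs1 s ltac:(eapply Rlt_le_trans; [apply Hs|apply Rmin_l])) as A.
  pose proof (Hs2 s ltac:(eapply Rlt_le_trans; [apply Hs|apply Rmin_r])) as B.
  replace (Cminus (Cmult (g s) (h s)) (Cmult (g t) (h t))) with
    (Cplus (Cmult (Cminus (g s) (g t)) (Cplus (Cminus (h s) (h t)) (h t)))
           (Cmult (g t) (Cminus (h s) (h t)))) by ring.
  eapply Rle_lt_trans. apply Cmod_triangle. rewrite !Cmod_mult.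
  pose proof (Cmod_triangle (Cminus (h s) (h t)) (h t)) as T.
  pose proof (Cmod_ge_0 (Cminus (g s) (g t))) as P1. pose proof (Cmod_ge_0 (Cminus (h s) (h t))) as P2.
  pose proof (Cmod_ge_0 (g t)) as P3. pose proof (Cmod_ge_0 (h t)) as P4.
  assert (E1 : e1 <= 1) by apply Rmin_l. assert (E2 : e1 <= e / K) by apply Rmin_r.
  assert (E3 : e1 * K <= e).
  { apply (Rmult_le_compat_r K) in E2; [|lra]. unfold Rdiv in E2.
     rewrite Rmult_assoc, Rinv_l, Rmult_1_r in E2; lra. }
  assert (Q1 : Cmod (Cminus (g s) (g t)) * Cmod (Cplus (Cminus (h s) (h t)) (h t))
                <= e1 * (1 + Cmod (h t))).
  { apply Rmult_le_compat; auto. apply Cmod_ge_0. lra. lra. }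
  assert (Q2 : Cmod (g t) * Cmod (Cminus (h s) (h t)) <= Cmod (g t) * e1) by (apply Rmult_le_compat_l; lra).
  unfold K in E3. nra.
Qed.

Lemma ccontinuity_pt_comp (g : R -> C) (phi : R -> R) t :
  continuity_pt phi t -> ccontinuity_pt g (phi t) -> ccontinuity_pt (fun s => g (phi s)) t.
Proof.
  intros Hp Hg e He. destruct (Hg e He) as [d [Hd Hs]].
  destruct (eps_delta_continuity_pt _ _ Hp d Hd) as [d' [Hd' Hs']]. exists d'; split; auto.
Qed.

Lemma ccontinuity_pt_RtoC (h : R -> R) t : continuity_pt h t -> ccontinuity_pt (fun s => RtoC (h s)) t.
Proof. intros H. apply ccontinuity_pt_pair; simpl; auto. apply continuity_pt_const. intros x y; auto. Qed.

Definition locally_lipschitz (f : C -> C) : Prop :=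
  forall B, exists L, 0 <= L /\ forall u v, Cmod u <= B -> Cmod v <= B ->
    Cmod (Cminus (f u) (f v)) <= L * Cmod (Cminus u v).

Lemma ccontinuity_pt_lipschitz_comp f g t : locally_lipschitz f -> ccontinuity_pt g t ->
  ccontinuity_pt (fun s => f (g s)) t.
Proof.
  intros Hf Hg e He. destruct (Hf (Cmod (g t) + 1)) as [L [HL HLs]].
  destruct (Hg (Rmin 1 (e / (L + 1)))) as [d [Hd Hs]].
  { apply Rmin_pos; [lra|]. apply Rdiv_lt_0_compat; lra. }
  exists d; split; auto. intros s Hs'. specialize (Hs s Hs').
  assert (A : Cmod (g s) <= Cmod (g t) + 1).
  { pose proof (Cmod_sub_triangle (g s) (g t) (RtoC 0)).
    replace (Cminus (g s) (RtoC 0)) with (g s) in H by ring.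
    replace (Cminus (g t) (RtoC 0)) with (g t) in H by ring. pose proof (Rmin_l 1 (e/(L+1))). lra. }
  eapply Rle_lt_trans. apply HLs; auto. pose proof (Cmod_ge_0 (g t)); lra.
  pose proof (Rmin_r 1 (e/(L+1))).
  assert (Cmod (Cminus (g s) (g t)) < e / (L+1)) by lra.
  assert (L * Cmod (Cminus (g s) (g t)) <= (L+1) * Cmod (Cminus (g s) (g t))).
  { pose proof (Cmod_ge_0 (Cminus (g s) (g t))); nra. }
  assert ((L+1) * Cmod (Cminus (g s) (g t)) < e).
  { apply (Rmult_lt_compat_l (L+1)) in H0; [|lra]. unfold Rdiv in H0.
    rewrite <- Rmult_assoc, (Rmult_comm (L+1) e), Rmult_assoc, Rinv_r, Rmult_1_r in H0; lra. }
  lra.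
Qed.

Definition half_plane_arg (z : C) : R := atan (snd z / fst z).

Lemma half_plane_arg_spec z : 0 < fst z -> z = Cmult (RtoC (Cmod z)) (cis (half_plane_arg z)).
Proof.
  intros Hx. destruct z as [x y]. simpl in Hx. unfold half_plane_arg, cis. simpl.
  rewrite cos_atan, sin_atan.
  set (s := sqrt (1 + (y / x)²)).
  assert (Hs : 0 < s) by (unfold s; apply sqrt_lt_R0; pose proof (Rle_0_sqr (y/x)); lra).
  assert (Hs2 : s * s = 1 + (y/x)²) by (unfold s; apply sqrt_sqrt; pose proof (Rle_0_sqr (y/x)); lra).
  assert (Hm : Cmod (x, y) = x * s).
  { unfold Cmod; simpl. rewrite <- (sqrt_square (x * s)) by nra. f_equal.
    replace (x * s * (x * s)) with (x * x * (s * s)) by ring. rewrite Hs2. unfold Rsqr. field. lra. }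
  rewrite Hm. apply C_ext; simpl; field; lra.
Qed.

Lemma cis_add_PI t : cis (t + PI) = Copp (cis t).
Proof. unfold cis. apply C_ext; simpl. rewrite neg_cos; auto. rewrite neg_sin; auto. Qed.

Lemma polar_form z : z <> RtoC 0 -> exists t, z = Cmult (RtoC (Cmod z)) (cis t).
Proof.
  intros Hz. destruct (Rlt_le_dec 0 (fst z)) as [H|H].
  - exists (half_plane_arg z). apply half_plane_arg_spec; auto.
  - destruct (Rlt_le_dec (fst z) 0) as [H'|H'].
    + exists (half_plane_arg (Copp z) + PI). rewrite cis_add_PI.
      assert (0 < fst (Copp z)) by (simpl; lra).
      pose proof (half_plane_arg_spec _ H0). rewrite Cmod_opp in H1.
      replace z with (Copp (Copp z)) at 1 by ring. rewrite H1 at 1. ring.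
    + assert (fst z = 0) by lra. destruct z as [x y]; simpl in *. subst x.
      assert (y <> 0) by (intro; subst; apply Hz; auto).
      assert (Cmod (0, y) = Rabs y).
      { unfold Cmod; simpl. replace (0 * (0 * 1) + y * (y * 1)) with (y * y) by ring. apply sqrt_Rsqr_abs. }
      rewrite H1. destruct (Rlt_le_dec 0 y).
      * exists (PI/2). unfold cis. rewrite cos_PI2, sin_PI2, Rabs_right by lra. apply C_ext; simpl; ring.
      * exists (-(PI/2)). unfold cis. rewrite cos_neg, sin_neg, cos_PI2, sin_PI2, Rabs_left by lra.
        apply C_ext; simpl; ring.
Qed.

Definition angle_lift (g : R -> C) (a b : R) (th : R -> R) : Prop :=
  (forall t, continuity_pt th t) /\
  (forall t, a <= t <= b -> g t = Cmult (RtoC (Cmod (g t))) (cis (th t))).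

Definition nonvanishing (g : R -> C) (a b : R) : Prop := forall t, a <= t <= b -> g t <> RtoC 0.

(* [is_arg_var g a b x]: x is the total increase of a continuous argument of
   g over [a, b]; for a loop it is 2 pi times the degree in [circle_degree]. *)
Definition is_arg_var (g : R -> C) (a b x : R) : Prop :=
  a <= b /\ nonvanishing g a b /\ exists th, angle_lift g a b th /\ th b - th a = x.

Lemma IZR_neq_add_half k m : IZR k = IZR m + /2 -> False.
Proof. intros H. assert (IZR (2 * k) = IZR (2 * m + 1)) by (rewrite plus_IZR, mult_IZR, mult_IZR; lra).
  apply eq_IZR in H0. lia. Qed.

Lemma integer_valued_const (h : R -> R) a b : a <= b -> (forall t, continuity_pt h t) ->
  (forall t, a <= t <= b -> exists k : Z, h t = IZR k) -> h a = h b.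
Proof.
  intros Hab Hc Hi.
  assert (Hcont : continuity h) by (intro; auto).
  destruct (Hi a ltac:(lra)) as [ka Ha]. destruct (Hi b ltac:(lra)) as [kb Hb].
  destruct (Z.lt_trichotomy ka kb) as [Hlt|[Heq|Hgt]].
  - exfalso. assert (a < b) by (destruct (Req_dec a b); [subst; rewrite Ha in Hb; apply eq_IZR in Hb;
    lia|lra]).
    destruct (IVT (fun t => h t - (IZR ka + /2)) a b) as [z [Hz1 Hz2]]; auto.
    + intro t. apply continuity_pt_minus; auto. apply continuity_pt_const. intros u v; auto.
    + rewrite Ha; lra.
    + rewrite Hb. assert (IZR kb >= IZR ka + 1).
      { rewrite <- plus_IZR. apply Rle_ge, IZR_le. lia. } lra.
    + destruct (Hi z Hz1) as [kz Hkz]. apply (IZR_neq_add_half kz ka). lra.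
  - subst; congruence.
  - exfalso. assert (a < b) by (destruct (Req_dec a b); [subst; rewrite Ha in Hb; apply eq_IZR in Hb;
    lia|lra]).
    destruct (IVT (fun t => (IZR kb + /2) - h t) a b) as [z [Hz1 Hz2]]; auto.
    + intro t. apply continuity_pt_minus; auto. apply continuity_pt_const. intros u v; auto.
    + rewrite Ha. assert (IZR ka >= IZR kb + 1).
      { rewrite <- plus_IZR. apply Rle_ge, IZR_le. lia. } lra.
    + rewrite Hb; lra.
    + destruct (Hi z Hz1) as [kz Hkz]. apply (IZR_neq_add_half kz kb). lra.
Qed.

Lemma cis_cancel_scale (r : R) t1 t2 : r <> 0 ->
  Cmult (RtoC r) (cis t1) = Cmult (RtoC r) (cis t2) -> cis t1 = cis t2.
Proof. intros Hr H. unfold cis, RtoC, Cmult in H; simpl in H. inversion H.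
  unfold cis. apply C_ext; simpl; apply (Rmult_eq_reg_l r); auto; lra. Qed.

Lemma angle_lift_uniq g a b th1 th2 : a <= b -> nonvanishing g a b -> angle_lift g a b th1 ->
  angle_lift g a b th2 ->
  th1 b - th1 a = th2 b - th2 a.
Proof.
  intros Hab Hnz [Hc1 H1] [Hc2 H2].
  assert (PI2 : 0 < 2 * PI) by (pose proof PI_RGT_0; lra).
  set (h := fun t => (th1 t - th2 t) / (2 * PI)).
  assert (h a = h b).
  { apply integer_valued_const; auto.
    - intro t. unfold h. apply continuity_pt_div. apply continuity_pt_minus; auto.
      apply continuity_pt_const; intros u v; auto. lra.
    - intros t Ht. assert (cis (th1 t) = cis (th2 t)).
      { apply (cis_cancel_scale (Cmod (g t))). intro Hm. apply (Hnz t Ht). apply Cmod_eq_0; auto.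
        rewrite <- H1, <- H2; auto. }
      destruct (cis_eq_cis _ _ H) as [k Hk]. exists k. unfold h. rewrite Hk. field. lra. }
  unfold h in H. apply (Rmult_eq_compat_r (2 * PI)) in H.
  unfold Rdiv in H. rewrite !Rmult_assoc, !Rinv_l in H by lra. lra.
Qed.

Lemma is_arg_var_uniq g a b x y : is_arg_var g a b x -> is_arg_var g a b y -> x = y.
Proof. intros [Hab [Hnz [th1 [L1 E1]]]] [_ [_ [th2 [L2 E2]]]]. subst.
  apply angle_lift_uniq with g; auto. Qed.

Lemma INR_unbounded x : exists n : nat, x < INR n.
Proof.
  destruct (archimed x) as [H1 H2]. destruct (Z_le_gt_dec 0 (up x)) as [Hz|Hz].
  - exists (Z.to_nat (up x)). rewrite INR_IZR_INZ, Z2Nat.id; auto; lra.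
  - exists 0%nat. simpl. apply Z.gt_lt in Hz. apply IZR_lt in Hz. lra.
Qed.

Lemma fst_mul_conj_pos (z w : C) : Cmod (Cminus z w) < Cmod w -> 0 < fst (Cmult z (Cconj w)).
Proof. intros H. apply Cmod_lt_sqr in H. destruct z as [x1 y1], w as [x2 y2]; simpl in *. nra. Qed.

Lemma Cconj_mul_self u : Cmult (Cconj u) u = RtoC (Cmod u * Cmod u).
Proof. rewrite Cmod_mul_self. destruct u as [x y]; apply C_ext; simpl; ring. Qed.

Lemma angle_lift_step (u v : C) phi : u <> RtoC 0 -> u = Cmult (RtoC (Cmod u)) (cis phi) ->
  0 < fst (Cmult v (Cconj u)) -> v = Cmult (RtoC (Cmod v)) (cis (phi + half_plane_arg (Cmult v (Cconj u)))).
Proof.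
  intros Hu Hphi Hre. set (w := Cmult v (Cconj u)).
  pose proof (half_plane_arg_spec w Hre) as Hw.
  assert (Hmw : Cmod w = Cmod v * Cmod u) by (unfold w; rewrite Cmod_mult, Cmod_conj; auto).
  assert (Hmu : 0 < Cmod u) by (apply Cmod_gt_0; auto).
  assert (E : Cmult v (RtoC (Cmod u * Cmod u)) = Cmult w u)
    by (rewrite <- Cconj_mul_self; unfold w; ring).
  assert (HX : RtoC (Cmod u * Cmod u) <> RtoC 0).
  { intro H. inversion H. nra. }
  replace v with (Cmult (Cmult v (RtoC (Cmod u * Cmod u))) (Cinv (RtoC (Cmod u * Cmod u)))) at 1
    by (field; auto).
  rewrite E. rewrite Hw at 1. rewrite Hphi at 1. rewrite Hmw, cis_add.
  apply C_ext; simpl; field; nra.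
Qed.

Fixpoint sum_lt (n : nat) (F : nat -> R) : R :=
  match n with O => 0 | S k => sum_lt k F + F k end.

Lemma continuity_pt_sum_lt n (F : nat -> R -> R) t : (forall k, (k < n)%nat -> continuity_pt (F k) t) ->
  continuity_pt (fun s => sum_lt n (fun k => F k s)) t.
Proof.
  induction n; intros H; simpl.
  - apply continuity_pt_const. intros u v; auto.
  - apply (continuity_pt_plus (fun s => sum_lt n (fun k => F k s)) (F n)).
    apply IHn; intros; apply H; lia. apply H; lia.
Qed.

Definition clamp (a b t : R) := Rmin (Rmax t a) b.

Lemma clamp_lip a b s t : Rabs (clamp a b s - clamp a b t) <= Rabs (s - t).
Proof. unfold clamp, Rmin, Rmax. repeat destruct Rle_dec;
  repeat match goal with |- context [Rabs ?x] => destruct (Rcase_abs x);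
    [rewrite (Rabs_left x) by assumption | rewrite (Rabs_right x) by assumption] end; lra. Qed.

Lemma clamp_cont a b t : continuity_pt (clamp a b) t.
Proof. apply continuity_pt_eps_delta. intros e He. exists e; split; auto. intros s Hs.
  eapply Rle_lt_trans; [apply clamp_lip|auto]. Qed.

Lemma clamp_in a b t : a <= b -> a <= clamp a b t <= b.
Proof. intros. unfold clamp, Rmin, Rmax. repeat destruct Rle_dec; lra. Qed.

Lemma clamp_id a b t : a <= t <= b -> clamp a b t = t.
Proof. intros. unfold clamp, Rmin, Rmax. repeat destruct Rle_dec; lra. Qed.

Lemma clamp_diff a b1 b2 t : a <= b1 <= b2 -> Rabs (clamp a b2 t - clamp a b1 t) <= b2 - b1.
Proof. intros. unfold clamp, Rmin, Rmax. repeat destruct Rle_dec; apply Rabs_le; split; lra. Qed.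

Lemma continuity_pt_half_plane_arg (w : R -> C) t : ccontinuity_pt w t -> 0 < fst (w t) ->
  continuity_pt (fun s => half_plane_arg (w s)) t.
Proof.
  intros Hw Hf. unfold half_plane_arg.
  apply (continuity_pt_comp (fun s => snd (w s) / fst (w s)) atan).
  - apply (continuity_pt_div (fun s => snd (w s)) (fun s => fst (w s))).
    apply ccontinuity_pt_snd; auto. apply ccontinuity_pt_fst; auto. lra.
  - apply derivable_continuous_pt, derivable_pt_atan.
Qed.

Lemma ccontinuous_uniform g a b e : ccontinuous g -> 0 < e ->
  exists d, 0 < d /\ forall s t, a <= s <= b -> a <= t <= b -> Rabs (s - t) < d ->
    Cmod (Cminus (g s) (g t)) < e.
Proof.
  intros Hg He.
  pose proof (Heine (fun t => fst (g t)) (fun c => a <= c <= b) (compact_P3 a b)) as H1.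
  pose proof (Heine (fun t => snd (g t)) (fun c => a <= c <= b) (compact_P3 a b)) as H2.
  destruct (H1 (fun x _ => ccontinuity_pt_fst g x (Hg x)) (mkposreal (e/2) ltac:(lra))) as [d1 Hd1].
  destruct (H2 (fun x _ => ccontinuity_pt_snd g x (Hg x)) (mkposreal (e/2) ltac:(lra))) as [d2 Hd2].
  exists (Rmin d1 d2). split. apply Rmin_pos; apply cond_pos.
  intros s t Hs Ht Hst. eapply Rle_lt_trans. apply Cmod_le_Rabs_sum.
  simpl in Hd1, Hd2.
  pose proof (Hd1 s t Hs Ht ltac:(eapply Rlt_le_trans; [apply Hst|apply Rmin_l])).
  pose proof (Hd2 s t Hs Ht ltac:(eapply Rlt_le_trans; [apply Hst|apply Rmin_r])).
  simpl. replace (fst (g s) + - fst (g t)) with (fst (g s) - fst (g t)) by ring.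
  replace (snd (g s) + - snd (g t)) with (snd (g s) - snd (g t)) by ring. lra.
Qed.

Lemma exists_INR_div_lt x d : 0 < d -> exists n : nat, 0 < INR n /\ x / INR n < d.
Proof.
  intros Hd. destruct (INR_unbounded (x / d)) as [n0 Hn0]. exists (S n0).
  assert (Hn : 0 < INR (S n0)) by (rewrite S_INR; pose proof (pos_INR n0); lra).
  split; auto. apply Rmult_lt_reg_r with (INR (S n0)); auto.
  unfold Rdiv. rewrite Rmult_assoc, Rinv_l by lra. rewrite Rmult_1_r.
  assert (x / d * d = x) by (field; lra).
  assert (x / d * d < INR (S n0) * d) by (rewrite S_INR; apply Rmult_lt_compat_r; lra). nra.
Qed.

Definition grid_clamp (a b : R) (n k : nat) (t : R) : R := clamp a (a + INR k * ((b - a) / INR n)) t.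

Section GridClamp.
Variables (a b : R) (n : nat).
Hypotheses (Hab : a <= b) (Hn : 0 < INR n).

Lemma grid_point_in k : (k <= n)%nat -> a <= a + INR k * ((b - a) / INR n) <= b.
Proof.
  intros Hk. apply le_INR in Hk. pose proof (pos_INR k).
  assert (0 <= (b - a) / INR n) by (apply Rdiv_le_0_compat; lra). split. nra.
  assert (INR k * ((b - a) / INR n) <= INR n * ((b - a) / INR n)) by nra.
  replace (INR n * ((b - a) / INR n)) with (b - a) in H1 by (field; lra). lra.
Qed.

Lemma grid_clamp_in k t : (k <= n)%nat -> a <= grid_clamp a b n k t <= b.
Proof.
  intros Hk. unfold grid_clamp. pose proof (grid_point_in k Hk).
  pose proof (clamp_in a (a + INR k * ((b - a) / INR n)) t ltac:(lra)). lra.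
Qed.

Lemma grid_clamp_step k t : (k < n)%nat ->
  Rabs (grid_clamp a b n (S k) t - grid_clamp a b n k t) <= (b - a) / INR n.
Proof.
  intros Hk. unfold grid_clamp. pose proof (grid_point_in k ltac:(lia)).
  assert (0 <= (b - a) / INR n) by (apply Rdiv_le_0_compat; lra).
  eapply Rle_trans. apply clamp_diff. rewrite S_INR. nra. rewrite S_INR. lra.
Qed.

Lemma grid_clamp_first t : grid_clamp a b n 0 t = a.
Proof. unfold grid_clamp, clamp, Rmin, Rmax. simpl. repeat destruct Rle_dec; lra. Qed.

Lemma grid_clamp_last t : a <= t <= b -> grid_clamp a b n n t = t.
Proof.
  intros Ht. unfold grid_clamp. replace (a + INR n * ((b - a) / INR n)) with b by (field; lra).
  apply clamp_id; auto.
Qed.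

End GridClamp.

(* Cut [a, b] into n pieces so short that g turns by less than a right angle
   on each; the k-th piece then contributes [half_plane_arg] of the quotient
   of its endpoint values.  Clamping makes the k-th term a continuous
   function of t on all of R. *)
Lemma angle_lift_exists g a b : a <= b -> ccontinuous g -> nonvanishing g a b ->
  exists th, angle_lift g a b th.
Proof.
  intros Hab Hg Hnz.
  destruct (continuity_ab_min (fun t => Cmod (g t)) a b Hab) as [mx [Hmx Hmxab]].
  { intros c _. apply continuity_pt_Cmod; auto. }
  assert (Hm : 0 < Cmod (g mx)) by (apply Cmod_gt_0; apply Hnz; auto).
  destruct (ccontinuous_uniform g a b (Cmod (g mx)) Hg Hm) as [d [Hd UC]].
  destruct (exists_INR_div_lt (b - a) d Hd) as [n [Hn Hhd]].
  set (cl := grid_clamp a b n).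
  set (w := fun k t => Cmult (g (cl (S k) t)) (Cconj (g (cl k t)))).
  assert (Hw : forall k t, (k < n)%nat -> 0 < fst (w k t)).
  { intros k t Hk. unfold w. apply fst_mul_conj_pos.
    eapply Rlt_le_trans. apply UC; try apply grid_clamp_in; auto; try lia.
    eapply Rle_lt_trans. apply grid_clamp_step; auto. auto.
    apply Hmx. apply grid_clamp_in; auto; lia. }
  destruct (polar_form (g a) (Hnz a ltac:(lra))) as [th0 Hth0].
  exists (fun t => th0 + sum_lt n (fun k => half_plane_arg (w k t))).
  split.
  - intro t. apply continuity_pt_plus. apply continuity_pt_const; intros u v; auto.
    apply (continuity_pt_sum_lt n (fun k s => half_plane_arg (w k s))). intros k Hk.
    apply continuity_pt_half_plane_arg; auto.
    unfold w, cl, grid_clamp. apply ccontinuity_pt_mult. apply ccontinuity_pt_comp. apply clamp_cont.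
      apply Hg.
    apply ccontinuity_pt_conj. apply ccontinuity_pt_comp. apply clamp_cont. apply Hg.
  - intros t Ht.
    assert (Hind : forall j, (j <= n)%nat ->
      g (cl j t) = Cmult (RtoC (Cmod (g (cl j t))))
                         (cis (th0 + sum_lt j (fun k => half_plane_arg (w k t))))).
    { induction j; intros Hj.
      - simpl. unfold cl. rewrite grid_clamp_first, Rplus_0_r; auto.
      - simpl. rewrite <- Rplus_assoc. apply angle_lift_step.
        + apply Hnz. apply grid_clamp_in; auto; lia.
        + apply IHj. lia.
        + apply Hw. lia. }
    pose proof (Hind n (le_n n)) as E. unfold cl in E. rewrite grid_clamp_last in E; auto.
Qed.

Lemma is_arg_var_exists g a b : a <= b -> ccontinuous g -> nonvanishing g a b ->
  exists x, is_arg_var g a b x.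
Proof. intros Hab Hg Hnz. destruct (angle_lift_exists g a b Hab Hg Hnz) as [th Hth].
  exists (th b - th a). repeat split; auto. exists th; auto. Qed.

Definition arg_var (g : R -> C) (a b : R) : R := epsilon (inhabits 0) (is_arg_var g a b).

Lemma arg_var_eq g a b x : is_arg_var g a b x -> arg_var g a b = x.
Proof. intros H. unfold arg_var. apply (is_arg_var_uniq g a b). apply epsilon_spec.
  exists x; auto. auto. Qed.

Lemma arg_var_ext g1 g2 a b : (forall t, g1 t = g2 t) -> arg_var g1 a b = arg_var g2 a b.
Proof. intros H. f_equal. apply functional_extensionality; auto. Qed.

Lemma arg_var_spec g a b : a <= b -> ccontinuous g -> nonvanishing g a b ->
  is_arg_var g a b (arg_var g a b).
Proof. intros. destruct (is_arg_var_exists g a b) as [x Hx]; auto.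
  rewrite (arg_var_eq _ _ _ _ Hx); auto. Qed.

Lemma angle_lift_restrict g a b a' b' th : a <= a' -> b' <= b -> angle_lift g a b th ->
  angle_lift g a' b' th.
Proof. intros H1 H2 [Hc Hl]. split; auto. intros t Ht. apply Hl. lra. Qed.

Lemma arg_var_add g a b c : a <= b -> b <= c -> ccontinuous g -> nonvanishing g a c ->
  arg_var g a c = arg_var g a b + arg_var g b c.
Proof.
  intros Hab Hbc Hg Hnz. destruct (angle_lift_exists g a c ltac:(lra) Hg Hnz) as [th Hth].
  rewrite (arg_var_eq g a c (th c - th a)).
  rewrite (arg_var_eq g a b (th b - th a)).
  rewrite (arg_var_eq g b c (th c - th b)). ring.
  all: repeat split; try lra; try (intros t Ht; apply Hnz; lra).
  all: exists th; split; auto; eapply angle_lift_restrict; eauto; lra.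
Qed.

Lemma is_arg_var_mult g1 g2 a b x y : is_arg_var g1 a b x -> is_arg_var g2 a b y ->
  is_arg_var (fun t => Cmult (g1 t) (g2 t)) a b (x + y).
Proof.
  intros [Hab [Hn1 [th1 [[Hc1 Hl1] E1]]]] [_ [Hn2 [th2 [[Hc2 Hl2] E2]]]].
  split; auto. split.
  - intros t Ht H. assert (Cmod (g1 t) * Cmod (g2 t) = 0) by (rewrite <- Cmod_mult, H, Cmod_0; auto).
    apply Rmult_integral in H0. destruct H0; [apply (Hn1 t)|apply (Hn2 t)]; auto; apply Cmod_eq_0; auto.
  - exists (fun t => th1 t + th2 t). split; [split|].
    + intro t. apply continuity_pt_plus; auto.
    + intros t Ht. rewrite Cmod_mult, cis_add. rewrite (Hl1 t Ht) at 1. rewrite (Hl2 t Ht) at 1.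
      apply C_ext; simpl; ring.
    + lra.
Qed.

Lemma is_arg_var_conj g a b x : is_arg_var g a b x -> is_arg_var (fun t => Cconj (g t)) a b (- x).
Proof.
  intros [Hab [Hn [th [[Hc Hl] E]]]]. split; auto. split.
  - intros t Ht H. apply (Hn t Ht). rewrite <- (Cconj_conj (g t)), H. apply C_ext; simpl; ring.
  - exists (fun t => - th t). split; [split|].
    + intro t. apply continuity_pt_opp; auto.
    + intros t Ht. rewrite Cmod_conj. rewrite (Hl t Ht) at 1. unfold cis.
      rewrite cos_neg, sin_neg. apply C_ext; simpl; ring.
    + lra.
Qed.

Lemma is_arg_var_const (z : C) a b : a <= b -> z <> RtoC 0 -> is_arg_var (fun _ => z) a b 0.
Proof.
  intros Hab Hz. destruct (polar_form z Hz) as [t0 Ht0]. split; auto. split.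
  - intros t _; auto.
  - exists (fun _ => t0). split; [split|].
    + intro; apply continuity_pt_const; intros u v; auto.
    + intros; auto.
    + ring.
Qed.

Lemma is_arg_var_rouche g1 g2 a b x : is_arg_var g1 a b x -> ccontinuous g1 -> ccontinuous g2 ->
  (forall t, a <= t <= b -> Cmod (Cminus (g2 t) (g1 t)) < Cmod (g1 t)) ->
  is_arg_var g2 a b
    (x + half_plane_arg (Cmult (g2 b) (Cconj (g1 b))) - half_plane_arg (Cmult (g2 a) (Cconj (g1 a)))).
Proof.
  intros [Hab [Hn [th [[Hc Hl] E]]]] H1 H2 Hr.
  set (w := fun t => Cmult (g2 t) (Cconj (g1 t))).
  assert (Hw : forall t, a <= t <= b -> 0 < fst (w t)) by (intros; apply fst_mul_conj_pos; auto).
  assert (Hwc : ccontinuous w) by (intro t; apply ccontinuity_pt_mult; auto; apply ccontinuity_pt_conj;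
    auto).
  split; auto. split.
  - intros t Ht H. specialize (Hr t Ht). rewrite H in Hr.
    replace (Cminus (RtoC 0) (g1 t)) with (Copp (g1 t)) in Hr by ring. rewrite Cmod_opp in Hr. lra.
  - exists (fun t => th t + half_plane_arg (w (clamp a b t))). split; [split|].
    + intro t. apply continuity_pt_plus; auto. apply continuity_pt_half_plane_arg.
      apply ccontinuity_pt_comp. apply clamp_cont. apply Hwc.
      apply Hw. apply clamp_in; auto.
    + intros t Ht. rewrite clamp_id; auto. apply angle_lift_step; auto. apply Hw; auto.
    + rewrite !clamp_id by lra. unfold w. lra.
Qed.

Lemma is_arg_var_reparam g A B x (phi : R -> R) a b : is_arg_var g A B x ->
  (forall t, continuity_pt phi t) ->
  a <= b -> phi a = A -> phi b = B -> (forall t, a <= t <= b -> A <= phi t <= B) ->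
  is_arg_var (fun t => g (phi t)) a b x.
Proof.
  intros [HAB [Hn [th [[Hc Hl] E]]]] Hp Hab Ha Hb Hin. split; auto. split.
  - intros t Ht. apply Hn; auto.
  - exists (fun t => th (phi t)). split; [split|].
    + intro t. apply (continuity_pt_comp phi th); auto.
    + intros t Ht. apply Hl; auto.
    + rewrite Ha, Hb; auto.
Qed.

Lemma is_arg_var_reparam_rev g A B x (phi : R -> R) a b : is_arg_var g A B x ->
  (forall t, continuity_pt phi t) ->
  a <= b -> phi a = B -> phi b = A -> (forall t, a <= t <= b -> A <= phi t <= B) ->
  is_arg_var (fun t => g (phi t)) a b (- x).
Proof.
  intros [HAB [Hn [th [[Hc Hl] E]]]] Hp Hab Ha Hb Hin. split; auto. split.
  - intros t Ht. apply Hn; auto.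
  - exists (fun t => th (phi t)). split; [split|].
    + intro t. apply (continuity_pt_comp phi th); auto.
    + intros t Ht. apply Hl; auto.
    + rewrite Ha, Hb; lra.
Qed.

Lemma is_arg_var_ext g1 g2 a b x : is_arg_var g1 a b x -> (forall t, a <= t <= b -> g1 t = g2 t) ->
  is_arg_var g2 a b x.
Proof.
  intros [Hab [Hn [th [[Hc Hl] E]]]] He. split; auto. split.
  - intros t Ht. rewrite <- He; auto.
  - exists th. split; [split|]; auto. intros t Ht. rewrite <- He; auto.
Qed.

Lemma is_arg_var_closed g x : is_arg_var g 0 1 x -> g 0 = g 1 -> exists k : Z, x = 2 * PI * IZR k.
Proof.
  intros [Hab [Hn [th [[Hc Hl] E]]]] He.
  assert (cis (th 1) = cis (th 0)).
  { pose proof (Hl 1 ltac:(lra)) as A. pose proof (Hl 0 ltac:(lra)) as B. rewrite He in B.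
    apply (cis_cancel_scale (Cmod (g 1))). intro H. apply (Hn 1 ltac:(lra)). apply Cmod_eq_0; auto.
    rewrite <- A. auto. }
  destruct (cis_eq_cis _ _ H) as [k Hk]. exists k. lra.
Qed.

Lemma is_arg_var_rouche_loop g1 g2 x : is_arg_var g1 0 1 x -> ccontinuous g1 -> ccontinuous g2 ->
  g1 0 = g1 1 -> g2 0 = g2 1 ->
  (forall t, 0 <= t <= 1 -> Cmod (Cminus (g2 t) (g1 t)) < Cmod (g1 t)) ->
  is_arg_var g2 0 1 x.
Proof.
  intros H Hc1 Hc2 E1 E2 Hr. pose proof (is_arg_var_rouche g1 g2 0 1 x H Hc1 Hc2 Hr).
  rewrite E1, E2 in H0. replace (x + half_plane_arg (Cmult (g2 1) (Cconj (g1 1))) - half_plane_arg (Cmult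
    (g2 1) (Cconj (g1 1)))) with x in H0 by ring.
  auto.
Qed.

Lemma continuity_pt_one_sided_lipschitz (G : R -> R) L s : 0 <= L ->
  (forall s1 s2, G s1 <= G s2 + L * Rabs (s1 - s2)) -> continuity_pt G s.
Proof.
  intros HL Gle. apply continuity_pt_eps_delta. intros e He. exists (e / (L + 1)).
  split. apply Rdiv_lt_0_compat; lra.
  intros s' Hs'. pose proof (Gle s' s). pose proof (Gle s s'). rewrite Rabs_minus_sym in H0.
  assert (L * Rabs (s' - s) < e).
  { apply Rle_lt_trans with ((L + 1) * Rabs (s' - s)). pose proof (Rabs_pos (s' - s)); nra.
    apply (Rmult_lt_compat_l (L + 1)) in Hs'; [|lra]. unfold Rdiv in Hs'.
    rewrite <- Rmult_assoc, (Rmult_comm (L+1) e), Rmult_assoc, Rinv_r, Rmult_1_r in Hs'; lra. }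
  apply Rabs_def1; lra.
Qed.

(* The minimum over t of |F s t| is Lipschitz in s, hence attains a positive
   minimum over s. *)
Lemma family_Cmod_bounded_below (F : R -> R -> C) a b c d L :
  a <= b -> c <= d -> 0 <= L -> (forall s, ccontinuous (F s)) ->
  (forall s s' t, a <= s <= b -> a <= s' <= b -> c <= t <= d ->
     Cmod (Cminus (F s t) (F s' t)) <= L * Rabs (s - s')) ->
  (forall s t, a <= s <= b -> c <= t <= d -> F s t <> RtoC 0) ->
  exists m, 0 < m /\ forall s t, a <= s <= b -> c <= t <= d -> m <= Cmod (F s t).
Proof.
  intros Hab Hcd HL Hc HLip Hnz.
  set (P := fun s t => c <= t <= d /\ forall t', c <= t' <= d -> Cmod (F s t) <= Cmod (F s t')).
  assert (HP : forall s, exists t, P s t).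
  { intro s. destruct (continuity_ab_min (fun t => Cmod (F s t)) c d Hcd) as [mx [H1 H2]].
    intros t _. apply continuity_pt_Cmod. apply Hc. exists mx; split; auto. }
  set (tm := fun s => epsilon (inhabits c) (P s)).
  assert (Htm : forall s, P s (tm s)) by (intro s; apply epsilon_spec; auto).
  set (G := fun s => Cmod (F (clamp a b s) (tm (clamp a b s)))).
  assert (Gle : forall s1 s2, G s1 <= G s2 + L * Rabs (s1 - s2)).
  { intros s1 s2. unfold G.
    set (x1 := clamp a b s1). set (x2 := clamp a b s2).
    destruct (Htm x1) as [T1 M1]. destruct (Htm x2) as [T2 M2].
    pose proof (M1 (tm x2) T2).
    pose proof (HLip x1 x2 (tm x2) (clamp_in a b s1 Hab) (clamp_in a b s2 Hab) T2).
    pose proof (Cmod_sub_triangle (F x1 (tm x2)) (F x2 (tm x2)) (RtoC 0)).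
    replace (Cminus (F x1 (tm x2)) (RtoC 0)) with (F x1 (tm x2)) in H1 by ring.
    replace (Cminus (F x2 (tm x2)) (RtoC 0)) with (F x2 (tm x2)) in H1 by ring.
    pose proof (clamp_lip a b s1 s2). fold x1 x2 in H2.
    assert (L * Rabs (x1 - x2) <= L * Rabs (s1 - s2)) by (apply Rmult_le_compat_l; auto).
    lra. }
  assert (Gc : forall s, continuity_pt G s) by (intro; apply (continuity_pt_one_sided_lipschitz G L); auto).
  destruct (continuity_ab_min G a b Hab) as [smin [H1 H2]]. { intros; auto. }
  exists (G smin). split.
  - unfold G. apply Cmod_gt_0. apply Hnz. apply clamp_in; auto. apply Htm.
  - intros s t Hs Ht. eapply Rle_trans. apply H1; eauto. unfold G. rewrite clamp_id by auto.
    apply Htm; auto.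
Qed.

Lemma is_arg_var_homotopy (F : R -> R -> C) L x : 0 <= L -> (forall s, ccontinuous (F s)) ->
  (forall s, 0 <= s <= 1 -> F s 0 = F s 1) ->
  (forall s s' t, 0 <= s <= 1 -> 0 <= s' <= 1 -> 0 <= t <= 1 ->
     Cmod (Cminus (F s t) (F s' t)) <= L * Rabs (s - s')) ->
  (forall s t, 0 <= s <= 1 -> 0 <= t <= 1 -> F s t <> RtoC 0) ->
  is_arg_var (F 0) 0 1 x -> is_arg_var (F 1) 0 1 x.
Proof.
  intros HL Hc Hcl HLip Hnz H0.
  destruct (family_Cmod_bounded_below F 0 1 0 1 L) as [m [Hm Hmin]]; try lra; auto.
  destruct (exists_INR_div_lt L m Hm) as [n [Hn HLn]].
  assert (Hj : forall j, (j <= n)%nat -> is_arg_var (F (INR j / INR n)) 0 1 x).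
  { intro j; induction j as [|j IHj]; intros Hjn.
    - rewrite INR_0. replace (0 / INR n) with 0 by (field; lra). auto.
    - assert (Hs1 : 0 <= INR j / INR n <= 1).
      { apply le_INR in Hjn. rewrite S_INR in Hjn. pose proof (pos_INR j). split.
        apply Rdiv_le_0_compat; lra. apply Rmult_le_reg_r with (INR n); auto. unfold Rdiv.
        rewrite Rmult_assoc, Rinv_l by lra. lra. }
      assert (Hs2 : 0 <= INR (S j) / INR n <= 1).
      { apply le_INR in Hjn. pose proof (pos_INR (S j)). split.
        apply Rdiv_le_0_compat; lra. apply Rmult_le_reg_r with (INR n); auto. unfold Rdiv.
        rewrite Rmult_assoc, Rinv_l by lra. lra. }
      apply is_arg_var_rouche_loop with (F (INR j / INR n)); auto.
      + apply IHj. lia.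
      + intros t Ht. eapply Rle_lt_trans. apply HLip; auto.
        apply Rle_lt_trans with (L / INR n).
        * rewrite S_INR. replace ((INR j + 1) / INR n - INR j / INR n) with (/ INR n) by (field; lra).
          rewrite Rabs_right. unfold Rdiv; lra. apply Rle_ge, Rlt_le, Rinv_0_lt_compat; auto.
        * eapply Rlt_le_trans. apply HLn. apply Hmin; auto. }
  pose proof (Hj n (le_n n)). replace (INR n / INR n) with 1 in H by (field; lra). auto.
Qed.

(** * Argument variation around rectangles *)

Definition segment (z w : C) (s : R) : C := Cplus z (Cmult (RtoC s) (Cminus w z)).
Definition segment_arg (f : C -> C) (z w : C) : R := arg_var (fun s => f (segment z w s)) 0 1.

Lemma ccontinuity_pt_RtoC_id t : ccontinuity_pt (fun s => RtoC s) t.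
Proof. apply ccontinuity_pt_RtoC. apply continuity_pt_id. Qed.

Lemma segment_ccontinuous z w : ccontinuous (segment z w).
Proof. intro t. unfold segment. apply ccontinuity_pt_plus. apply ccontinuity_pt_const.
  apply ccontinuity_pt_mult.
  apply ccontinuity_pt_RtoC_id. apply ccontinuity_pt_const. Qed.

Lemma comp_segment_ccontinuous f z w : locally_lipschitz f -> ccontinuous (fun s => f (segment z w s)).
Proof. intros Hf t. apply ccontinuity_pt_lipschitz_comp; auto. apply segment_ccontinuous. Qed.

Lemma segment_0 z w : segment z w 0 = z.
Proof. unfold segment. apply C_ext; simpl; ring. Qed.
Lemma segment_1 z w : segment z w 1 = w.
Proof. unfold segment. apply C_ext; simpl; ring. Qed.

Definition segment_nonvanishing f z w := forall s, 0 <= s <= 1 -> f (segment z w s) <> RtoC 0.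

Lemma segment_arg_spec f z w : locally_lipschitz f -> segment_nonvanishing f z w ->
  is_arg_var (fun s => f (segment z w s)) 0 1 (segment_arg f z w).
Proof. intros. apply arg_var_spec; auto. lra. apply comp_segment_ccontinuous; auto. Qed.

Lemma segment_arg_split f z w lam : locally_lipschitz f -> 0 <= lam <= 1 -> segment_nonvanishing f z w ->
  segment_arg f z w = segment_arg f z (segment z w lam) + segment_arg f (segment z w lam) w.
Proof.
  intros Hf Hl Hnz. unfold segment_arg at 1.
  rewrite (arg_var_add _ 0 lam 1) by (try lra; try apply comp_segment_ccontinuous; auto).
  f_equal.
  - symmetry. apply arg_var_eq.
    assert (H : is_arg_var (fun s => f (segment z w s)) 0 lam (arg_var (fun s => f (segment z w s)) 0 lam)).
    { apply arg_var_spec. lra. apply comp_segment_ccontinuous; auto. intros t Ht; apply Hnz; lra. }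
    pose proof (is_arg_var_reparam _ _ _ _ (fun s => lam * s) 0 1 H) as H2.
    eapply is_arg_var_ext. apply H2.
    + intro t. apply continuity_pt_mult. apply continuity_pt_const; intros u v; auto.
      apply continuity_pt_id.
    + lra.
    + ring.
    + ring.
    + intros; nra.
    + intros t _. simpl. f_equal. unfold segment. apply C_ext; simpl; ring.
  - symmetry. apply arg_var_eq.
    assert (H : is_arg_var (fun s => f (segment z w s)) lam 1 (arg_var (fun s => f (segment z w s)) lam 1)).
    { apply arg_var_spec. lra. apply comp_segment_ccontinuous; auto. intros t Ht; apply Hnz; lra. }
    pose proof (is_arg_var_reparam _ _ _ _ (fun s => lam + (1 - lam) * s) 0 1 H) as H2.
    eapply is_arg_var_ext. apply H2.
    + intro t. apply continuity_pt_plus. apply continuity_pt_const; intros u v; auto.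
      apply continuity_pt_mult. apply continuity_pt_const; intros u v; auto. apply continuity_pt_id.
    + lra.
    + ring.
    + ring.
    + intros; nra.
    + intros t _. simpl. f_equal. unfold segment. apply C_ext; simpl; ring.
Qed.

Lemma segment_arg_rev f z w : locally_lipschitz f -> segment_nonvanishing f z w ->
  segment_arg f w z = - segment_arg f z w.
Proof.
  intros Hf Hnz. apply arg_var_eq.
  pose proof (is_arg_var_reparam_rev _ _ _ _ (fun s => 1 - s) 0 1 (segment_arg_spec f z w Hf Hnz)) as H2.
  eapply is_arg_var_ext. apply H2.
  + intro t. apply continuity_pt_minus. apply continuity_pt_const; intros u v; auto. apply continuity_pt_id.
  + lra.
  + ring.
  + ring.
  + intros; lra.
  + intros t _. simpl. f_equal. unfold segment. apply C_ext; simpl; ring.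
Qed.

Lemma segment_arg_near_const f z w (c : C) : locally_lipschitz f -> f c <> RtoC 0 ->
  (forall s, 0 <= s <= 1 -> Cmod (Cminus (f (segment z w s)) (f c)) < Cmod (f c)) ->
  segment_arg f z w
  = half_plane_arg (Cmult (f w) (Cconj (f c))) - half_plane_arg (Cmult (f z) (Cconj (f c))).
Proof.
  intros Hf Hc Hr. apply arg_var_eq.
  pose proof (is_arg_var_rouche (fun _ => f c) (fun s => f (segment z w s)) 0 1 0
     (is_arg_var_const (f c) 0 1 ltac:(lra) Hc) (fun t => ccontinuity_pt_const _ t)
       (comp_segment_ccontinuous f z w Hf) Hr).
  cbv beta in H. rewrite segment_0, segment_1, Rplus_0_l in H. exact H.
Qed.

Definition rect_arg (f : C -> C) (x0 x1 y0 y1 : R) : R :=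
  segment_arg f (x0, y0) (x1, y0) + segment_arg f (x1, y0) (x1, y1)
  + segment_arg f (x1, y1) (x0, y1) + segment_arg f (x0, y1) (x0, y0).

Definition boundary_nonvanishing (f : C -> C) (x0 x1 y0 y1 : R) : Prop :=
  forall x y, x0 <= x <= x1 -> y0 <= y <= y1 -> (x = x0 \/ x = x1 \/ y = y0 \/ y = y1) ->
    f (x, y) <> RtoC 0.

Lemma segment_horizontal x0 x1 y s : segment (x0, y) (x1, y) s = (x0 + s * (x1 - x0), y).
Proof. unfold segment. apply C_ext; simpl; ring. Qed.
Lemma segment_vertical x y0 y1 s : segment (x, y0) (x, y1) s = (x, y0 + s * (y1 - y0)).
Proof. unfold segment. apply C_ext; simpl; ring. Qed.

Lemma segment_nonvanishing_horizontal f x0 x1 y0 y1 y : x0 <= x1 -> (y = y0 \/ y = y1) -> y0 <= y1 ->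
  boundary_nonvanishing f x0 x1 y0 y1 ->
  segment_nonvanishing f (x0, y) (x1, y) /\ segment_nonvanishing f (x1, y) (x0, y).
Proof. intros Hx Hy Hy' H. split; intros s Hs; rewrite segment_horizontal; apply H; try nra; intuition. Qed.

Lemma segment_nonvanishing_vertical f x0 x1 y0 y1 x : y0 <= y1 -> (x = x0 \/ x = x1) -> x0 <= x1 ->
  boundary_nonvanishing f x0 x1 y0 y1 ->
  segment_nonvanishing f (x, y0) (x, y1) /\ segment_nonvanishing f (x, y1) (x, y0).
Proof. intros Hx Hy Hy' H. split; intros s Hs; rewrite segment_vertical; apply H; try nra; intuition. Qed.

Lemma rect_arg_split_x f x0 x1 x2 y0 y1 : locally_lipschitz f -> x0 <= x1 <= x2 -> x0 < x2 -> y0 <= y1 ->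
  boundary_nonvanishing f x0 x1 y0 y1 -> boundary_nonvanishing f x1 x2 y0 y1 ->
  rect_arg f x0 x2 y0 y1 = rect_arg f x0 x1 y0 y1 + rect_arg f x1 x2 y0 y1.
Proof.
  intros Hf Hx Hx' Hy B1 B2. unfold rect_arg.
  set (lam := (x1 - x0) / (x2 - x0)).
  assert (Hl : 0 <= lam <= 1).
  { unfold lam; split. apply Rdiv_le_0_compat; lra. apply Rmult_le_reg_r with (x2 - x0). lra.
    unfold Rdiv; rewrite Rmult_assoc, Rinv_l; lra. }
  assert (B : boundary_nonvanishing f x0 x2 y0 y1).
  { intros x y Hxx Hyy Hb. destruct (Rle_dec x x1).
    - apply B1; [lra|lra|]; destruct Hb as [H|[H|[H|H]]];
        [left; lra | right; left; lra | right; right; left; lra | right; right; right; lra].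
    - apply B2; [lra|lra|]; destruct Hb as [H|[H|[H|H]]];
        [left; lra | right; left; lra | right; right; left; lra | right; right; right; lra]. }
  assert (E1 : segment (x0, y0) (x2, y0) lam = (x1, y0)) by (rewrite segment_horizontal; unfold lam;
    f_equal; field; lra).
  assert (E2 : segment (x2, y1) (x0, y1) (1 - lam) = (x1, y1)) by (rewrite segment_horizontal; unfold lam;
    f_equal; field; lra).
  rewrite (segment_arg_split f (x0, y0) (x2, y0) lam), E1; auto.
  2: apply (segment_nonvanishing_horizontal f x0 x2 y0 y1); auto; lra.
  rewrite (segment_arg_split f (x2, y1) (x0, y1) (1 - lam)), E2; auto; try lra.
  2: apply (segment_nonvanishing_horizontal f x0 x2 y0 y1); auto; lra.
  rewrite (segment_arg_rev f (x1, y0) (x1, y1)); auto.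
  2: apply (segment_nonvanishing_vertical f x1 x2 y0 y1); auto; lra.
  ring.
Qed.

Lemma rect_arg_split_y f x0 x1 y0 y1 y2 : locally_lipschitz f -> y0 <= y1 <= y2 -> y0 < y2 -> x0 <= x1 ->
  boundary_nonvanishing f x0 x1 y0 y1 -> boundary_nonvanishing f x0 x1 y1 y2 ->
  rect_arg f x0 x1 y0 y2 = rect_arg f x0 x1 y0 y1 + rect_arg f x0 x1 y1 y2.
Proof.
  intros Hf Hy Hy' Hx B1 B2. unfold rect_arg.
  set (lam := (y1 - y0) / (y2 - y0)).
  assert (Hl : 0 <= lam <= 1).
  { unfold lam; split. apply Rdiv_le_0_compat; lra. apply Rmult_le_reg_r with (y2 - y0). lra.
    unfold Rdiv; rewrite Rmult_assoc, Rinv_l; lra. }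
  assert (B : boundary_nonvanishing f x0 x1 y0 y2).
  { intros x y Hxx Hyy Hb. destruct (Rle_dec y y1).
    - apply B1; [lra|lra|]; destruct Hb as [H|[H|[H|H]]];
        [left; lra | right; left; lra | right; right; left; lra | right; right; right; lra].
    - apply B2; [lra|lra|]; destruct Hb as [H|[H|[H|H]]];
        [left; lra | right; left; lra | right; right; left; lra | right; right; right; lra]. }
  assert (E1 : segment (x1, y0) (x1, y2) lam = (x1, y1)) by (rewrite segment_vertical; unfold lam; f_equal;
    field; lra).
  assert (E2 : segment (x0, y2) (x0, y0) (1 - lam) = (x0, y1)) by (rewrite segment_vertical; unfold lam;
    f_equal; field; lra).
  rewrite (segment_arg_split f (x1, y0) (x1, y2) lam), E1; auto.
  2: apply (segment_nonvanishing_vertical f x0 x1 y0 y2); auto; lra.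
  rewrite (segment_arg_split f (x0, y2) (x0, y0) (1 - lam)), E2; auto; try lra.
  2: apply (segment_nonvanishing_vertical f x0 x1 y0 y2); auto; lra.
  rewrite (segment_arg_rev f (x0, y1) (x1, y1)); auto.
  2: apply (segment_nonvanishing_horizontal f x0 x1 y1 y2); auto; lra.
  ring.
Qed.

Lemma segment_arg_rouche f g z w : locally_lipschitz f -> locally_lipschitz g ->
  segment_nonvanishing g z w ->
  (forall s, 0 <= s <= 1 -> Cmod (Cminus (f (segment z w s)) (g (segment z w s))) < Cmod (g
    (segment z w s))) ->
  segment_arg f z w = segment_arg g z w + half_plane_arg (Cmult (f w) (Cconj (g w))) - half_plane_arg
    (Cmult (f z) (Cconj (g z))).
Proof.
  intros Hf Hg Hnz Hr. apply arg_var_eq.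
  pose proof (is_arg_var_rouche _ _ 0 1 _ (segment_arg_spec g z w Hg Hnz)
    (comp_segment_ccontinuous g z w Hg) (comp_segment_ccontinuous f z w Hf) Hr) as H.
  cbv beta in H. rewrite segment_0, segment_1 in H. auto.
Qed.

Lemma rect_arg_rouche f g x0 x1 y0 y1 : locally_lipschitz f -> locally_lipschitz g -> x0 <= x1 ->
  y0 <= y1 -> boundary_nonvanishing g x0 x1 y0 y1 ->
  (forall x y, x0 <= x <= x1 -> y0 <= y <= y1 -> (x = x0 \/ x = x1 \/ y = y0 \/ y = y1) ->
     Cmod (Cminus (f (x, y)) (g (x, y))) < Cmod (g (x, y))) ->
  rect_arg f x0 x1 y0 y1 = rect_arg g x0 x1 y0 y1.
Proof.
  intros Hf Hg Hx Hy B Hb. unfold rect_arg.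
  rewrite (segment_arg_rouche f g (x0, y0) (x1, y0)), (segment_arg_rouche f g (x1, y0) (x1, y1)),
    (segment_arg_rouche f g (x1, y1) (x0, y1)), (segment_arg_rouche f g (x0, y1) (x0, y0)); auto; try ring.
  all: try (intros s Hs; first [rewrite segment_horizontal | rewrite segment_vertical]; apply Hb;
    [nra|nra|tauto]).
  all: try (apply (segment_nonvanishing_horizontal g x0 x1 y0 y1); auto; tauto).
  all: try (apply (segment_nonvanishing_vertical g x0 x1 y0 y1); auto; tauto).
Qed.

Lemma Cmod_sub_horizontal x x' y : Cmod (Cminus (x, y) (x', y)) = Rabs (x - x').
Proof. rewrite <- sqrt_Rsqr_abs. unfold Cmod. f_equal. unfold Rsqr. simpl. ring. Qed.

Lemma INR_le_pow2 n : INR n <= 2 ^ n.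
Proof. induction n. simpl; lra. rewrite S_INR. simpl. pose proof (pow_le 2 n ltac:(lra)). 
  assert (1 <= 2 ^ n) by (apply pow_R1_Rle; lra). lra. Qed.

Lemma vertical_line_ccontinuous x : ccontinuous (fun y => (x, y) : C).
Proof. intro t. apply ccontinuity_pt_pair; simpl. apply continuity_pt_const; intros u v; auto.
  apply continuity_pt_id. Qed.

Lemma zero_free_boundary_nonvanishing f x0 x1 y0 y1 a0 a1 b0 b1 :
  (forall x y, x0 <= x <= x1 -> y0 <= y <= y1 -> f (x, y) <> RtoC 0) ->
  x0 <= a0 -> a1 <= x1 -> y0 <= b0 -> b1 <= y1 -> boundary_nonvanishing f a0 a1 b0 b1.
Proof. intros H ? ? ? ? x y Hx Hy _. apply H; lra. Qed.

(* Near a corner c, f stays in the disc of radius |f c| around f c, so each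
   edge contributes a difference of [half_plane_arg]s and the four telescope. *)
Lemma rect_arg_small_zero f x0 x1 y0 y1 : locally_lipschitz f -> x0 <= x1 -> y0 <= y1 ->
  (forall x y, x0 <= x <= x1 -> y0 <= y <= y1 -> f (x, y) <> RtoC 0) ->
  exists d, 0 < d /\ forall a0 a1 b0 b1, x0 <= a0 <= a1 -> a1 <= x1 -> y0 <= b0 <= b1 -> b1 <= y1 ->
    a1 - a0 <= d -> b1 - b0 <= d -> rect_arg f a0 a1 b0 b1 = 0.
Proof.
  intros Hf Hx Hy Hnz.
  set (B := Rabs x0 + Rabs x1 + Rabs y0 + Rabs y1).
  assert (HB : forall x y, x0 <= x <= x1 -> y0 <= y <= y1 -> Cmod (x, y) <= B).
  { intros x y H1 H2. eapply Rle_trans. apply (Cmod_le_Rabs_sum (x, y)). unfold B. simpl.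
    assert (Rabs x <= Rabs x0 + Rabs x1) by (unfold Rabs; repeat destruct Rcase_abs; lra).
    assert (Rabs y <= Rabs y0 + Rabs y1) by (unfold Rabs; repeat destruct Rcase_abs; lra).
    pose proof (Rabs_pos x0). pose proof (Rabs_pos x1). pose proof (Rabs_pos y0). pose proof (Rabs_pos y1).
      lra. }
  destruct (Hf B) as [L [HL HLip]].
  destruct (family_Cmod_bounded_below (fun x y => f (x, y)) x0 x1 y0 y1 L) as [m [Hm Hmin]]; auto.
  { intros s t. apply ccontinuity_pt_lipschitz_comp; auto. apply vertical_line_ccontinuous. }
  { intros s s' t Hs Hs' Ht. eapply Rle_trans. apply HLip; apply HB; auto. rewrite Cmod_sub_horizontal.
    lra. }
  exists (m / (2 * (L + 1))). split; [apply Rdiv_lt_0_compat; lra|].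
  set (d := m / (2 * (L + 1))).
  assert (HLd : 2 * L * d < m).
  { unfold d. apply Rlt_le_trans with (2 * (L + 1) * (m / (2 * (L + 1)))).
    apply Rmult_lt_compat_r. apply Rdiv_lt_0_compat; lra. lra. right; field; lra. }
  intros a0 a1 b0 b1 Ha Ha' Hb Hb' Hwa Hwb.
  set (c := (a0, b0) : C).
  assert (Hc : f c <> RtoC 0) by (apply Hnz; lra).
  assert (Hcl : forall x y, a0 <= x <= a1 -> b0 <= y <= b1 -> Cmod (Cminus (f (x, y)) (f c)) < Cmod (f c)).
  { intros x y Hxx Hyy. eapply Rle_lt_trans. apply HLip. apply HB; lra. apply HB; lra.
    eapply Rle_lt_trans. apply Rmult_le_compat_l; auto.
    replace (Cminus (x, y) c) with ((x - a0, y - b0) : C) by (apply C_ext; simpl; ring).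
    apply (Cmod_le_Rabs_sum (x - a0, y - b0)).
    eapply Rlt_le_trans with m; [|apply Hmin; lra]. simpl.
    rewrite !Rabs_right by lra. nra. }
  unfold rect_arg. rewrite (segment_arg_near_const f _ _ c), (segment_arg_near_const f (a1, b0) _ c),
    (segment_arg_near_const f (a1, b1) _ c), (segment_arg_near_const f (a0, b1) _ c); auto; try ring.
  all: intros s Hs; first [rewrite segment_horizontal | rewrite segment_vertical]; apply Hcl; nra.
Qed.

Lemma rect_arg_zero_dyadic f x0 x1 y0 y1 d : locally_lipschitz f -> 0 < d ->
  (forall x y, x0 <= x <= x1 -> y0 <= y <= y1 -> f (x, y) <> RtoC 0) ->
  (forall a0 a1 b0 b1, x0 <= a0 <= a1 -> a1 <= x1 -> y0 <= b0 <= b1 -> b1 <= y1 ->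
     a1 - a0 <= d -> b1 - b0 <= d -> rect_arg f a0 a1 b0 b1 = 0) ->
  forall k a0 a1 b0 b1, x0 <= a0 <= a1 -> a1 <= x1 -> y0 <= b0 <= b1 -> b1 <= y1 ->
    a1 - a0 <= 2 ^ k * d -> b1 - b0 <= 2 ^ k * d -> rect_arg f a0 a1 b0 b1 = 0.
Proof.
  intros Hf Hd Hnz Hsmall k. induction k as [|k IH].
  - simpl. intros. apply Hsmall; lra.
  - assert (Hk : 0 <= 2 ^ k * d) by (apply Rmult_le_pos; [apply pow_le; lra| lra]).
    assert (Hwide : forall a0 a1 b0 b1, x0 <= a0 <= a1 -> a1 <= x1 -> y0 <= b0 <= b1 -> b1 <= y1 ->
          a1 - a0 <= 2 ^ S k * d -> b1 - b0 <= 2 ^ k * d -> rect_arg f a0 a1 b0 b1 = 0).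
    { intros a0 a1 b0 b1 Ha Ha' Hb Hb' Hwa Hwb. simpl in Hwa.
      destruct (Req_dec a0 a1) as [E|E]; [apply IH; auto; lra|].
      rewrite (rect_arg_split_x f a0 ((a0 + a1) / 2) a1); auto; try lra.
      rewrite (IH a0 ((a0+a1)/2)), (IH ((a0+a1)/2) a1); auto; try lra.
      all: try (apply (zero_free_boundary_nonvanishing f x0 x1 y0 y1); auto; lra). }
    intros a0 a1 b0 b1 Ha Ha' Hb Hb' Hwa Hwb. simpl in Hwb.
    destruct (Req_dec b0 b1) as [E|E]; [apply Hwide; auto; lra|].
    rewrite (rect_arg_split_y f a0 a1 b0 ((b0 + b1) / 2) b1); auto; try lra.
    rewrite (Hwide a0 a1 b0 ((b0+b1)/2)), (Hwide a0 a1 ((b0+b1)/2) b1); auto; try lra.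
    all: try (apply (zero_free_boundary_nonvanishing f x0 x1 y0 y1); auto; lra).
Qed.

Lemma rect_arg_zero_free f x0 x1 y0 y1 : locally_lipschitz f -> x0 <= x1 -> y0 <= y1 ->
  (forall x y, x0 <= x <= x1 -> y0 <= y <= y1 -> f (x, y) <> RtoC 0) ->
  rect_arg f x0 x1 y0 y1 = 0.
Proof.
  intros Hf Hx Hy Hnz.
  destruct (rect_arg_small_zero f x0 x1 y0 y1 Hf Hx Hy Hnz) as [d [Hd Hsmall]].
  destruct (INR_unbounded ((x1 - x0 + (y1 - y0)) / d)) as [k Hk].
  pose proof (INR_le_pow2 k).
  assert (x1 - x0 + (y1 - y0) < 2 ^ k * d).
  { apply Rlt_le_trans with (INR k * d).
    apply (Rmult_lt_compat_r d) in Hk; auto. unfold Rdiv in Hk.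
      rewrite Rmult_assoc, Rinv_l, Rmult_1_r in Hk; lra.
    apply Rmult_le_compat_r; lra. }
  apply (rect_arg_zero_dyadic f x0 x1 y0 y1 d Hf Hd Hnz Hsmall k); lra.
Qed.

(** * Small squares and circles *)

Definition max_abs_cos_sin (th : R) : R := (Rabs (cos th) + Rabs (sin th) + Rabs (Rabs (cos th) - Rabs
  (sin th))) / 2.

Lemma max_abs_cos_sin_ge th : Rabs (cos th) <= max_abs_cos_sin th /\ Rabs (sin th) <= max_abs_cos_sin th.
Proof. unfold max_abs_cos_sin. pose proof (Rle_abs (Rabs (cos th) - Rabs (sin th))).
  pose proof (Rle_abs (Rabs (sin th) - Rabs (cos th))). rewrite Rabs_minus_sym in H0. split; lra. Qed.

Lemma max_abs_cos_sin_ge_half th : 1/2 <= max_abs_cos_sin th.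
Proof.
  destruct (max_abs_cos_sin_ge th) as [H1 H2]. pose proof (sin2_cos2 th). unfold Rsqr in H.
  pose proof (Rsqr_abs (cos th)). pose proof (Rsqr_abs (sin th)). unfold Rsqr in *.
  pose proof (Rabs_pos (cos th)). pose proof (Rabs_pos (sin th)).
  destruct (Rle_dec (1/2) (max_abs_cos_sin th)); auto. nra.
Qed.

Lemma max_abs_cos_sin_cos th : Rabs (sin th) <= Rabs (cos th) -> max_abs_cos_sin th = Rabs (cos th).
Proof. intros. unfold max_abs_cos_sin. rewrite (Rabs_right (Rabs (cos th) - Rabs (sin th))) by lra.
  lra. Qed.

Lemma continuity_pt_max_abs_cos_sin th : continuity_pt max_abs_cos_sin th.
Proof.
  unfold max_abs_cos_sin. apply continuity_pt_div; [|apply continuity_pt_const; intros u v; auto|lra].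
  assert (Hc : continuity_pt (fun t => Rabs (cos t)) th)
    by (apply (continuity_pt_comp cos Rabs); [apply continuity_cos| apply Rcontinuity_abs]).
  assert (Hs : continuity_pt (fun t => Rabs (sin t)) th)
    by (apply (continuity_pt_comp sin Rabs); [apply continuity_sin| apply Rcontinuity_abs]).
  apply continuity_pt_plus. apply continuity_pt_plus; auto.
  apply (continuity_pt_comp (fun t => Rabs (cos t) - Rabs (sin t)) Rabs).
  apply continuity_pt_minus; auto. apply Rcontinuity_abs.
Qed.

Lemma cos_add_PI2 th : cos (th + PI / 2) = - sin th.
Proof. rewrite cos_plus, cos_PI2, sin_PI2. ring. Qed.
Lemma sin_add_PI2 th : sin (th + PI / 2) = cos th.
Proof. rewrite sin_plus, cos_PI2, sin_PI2. ring. Qed.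

Lemma max_abs_cos_sin_add_PI2 th : max_abs_cos_sin (th + PI / 2) = max_abs_cos_sin th.
Proof. unfold max_abs_cos_sin. rewrite cos_add_PI2, sin_add_PI2, Rabs_Ropp.
  replace (Rabs (sin th) - Rabs (cos th)) with (- (Rabs (cos th) - Rabs (sin th))) by ring.
  rewrite Rabs_Ropp. lra. Qed.

Lemma cos_dominates_quarter th : - (PI / 4) <= th <= PI / 4 -> 0 < cos th /\ Rabs (sin th) <= cos th.
Proof.
  intros H. pose proof PI_RGT_0.
  assert (A : 0 <= cos (th + PI / 4)) by (apply cos_ge_0; lra).
  assert (B : 0 <= cos (th - PI / 4)) by (apply cos_ge_0; lra).
  rewrite cos_plus, cos_PI4, sin_PI4 in A. rewrite cos_minus, cos_PI4, sin_PI4 in B.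
  assert (S2 : 0 < 1 / sqrt 2) by (apply Rdiv_lt_0_compat; [lra|apply sqrt_lt_R0; lra]).
  assert (C1 : sin th <= cos th) by nra.
  assert (C2 : - sin th <= cos th) by nra.
  assert (Ha : Rabs (sin th) <= cos th) by (apply Rabs_le; lra).
  split; auto. destruct (Rle_lt_or_eq_dec 0 (cos th)); auto. apply (Rle_trans _ _ _ (Rabs_pos _) Ha).
  exfalso. pose proof (sin2_cos2 th). unfold Rsqr in H1. rewrite <- e in *.
  pose proof (Rsqr_abs (sin th)). pose proof (Rabs_pos (sin th)). unfold Rsqr in H2.
  assert (Rabs (sin th) = 0) by lra. nra.
Qed.

(* Polar parametrisation of the boundary of the square of half-side h centred
   at al, starting at the midpoint of its right edge. *)
Definition square_loop (al : C) (h t : R) : C :=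
  Cplus al (Cmult (RtoC (h / max_abs_cos_sin (2 * PI * t))) (cis (2 * PI * t))).

Lemma ccontinuity_pt_cis_scale (k : R) t : ccontinuity_pt (fun s => cis (k * s)) t.
Proof. apply ccontinuity_pt_pair; simpl.
  - apply (continuity_pt_comp (fun s => k * s) cos). apply continuity_pt_mult.
    apply continuity_pt_const; intros u v; auto. apply continuity_pt_id. apply continuity_cos.
  - apply (continuity_pt_comp (fun s => k * s) sin). apply continuity_pt_mult.
    apply continuity_pt_const; intros u v; auto. apply continuity_pt_id. apply continuity_sin.
Qed.

Lemma max_abs_cos_sin_pos th : 0 < max_abs_cos_sin th.
Proof. pose proof (max_abs_cos_sin_ge_half th); lra. Qed.

Lemma square_loop_ccontinuous al h : ccontinuous (square_loop al h).
Proof.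
  intro t. unfold square_loop. apply ccontinuity_pt_plus. apply ccontinuity_pt_const.
    apply ccontinuity_pt_mult; [|apply ccontinuity_pt_cis_scale].
  apply ccontinuity_pt_RtoC. apply continuity_pt_div. apply continuity_pt_const; intros u v; auto.
  apply (continuity_pt_comp (fun s => 2 * PI * s) max_abs_cos_sin). apply continuity_pt_mult.
  apply continuity_pt_const; intros u v; auto. apply continuity_pt_id. apply continuity_pt_max_abs_cos_sin.
  apply Rgt_not_eq, max_abs_cos_sin_pos.
Qed.

(* On [-1/8, 1/8] the square loop is at height h tan (2 pi t) on the right
   edge; this is that height rescaled to a segment parameter in [0, 1]. *)
Definition square_edge_reparam (t : R) : R := (tan (2 * PI * clamp (-/8) (/8) t) + 1) / 2.

Lemma continuity_pt_square_edge_reparam t : continuity_pt square_edge_reparam t.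
Proof.
  unfold square_edge_reparam. apply continuity_pt_div; [|apply continuity_pt_const; intros u v; auto|lra].
  apply continuity_pt_plus; [|apply continuity_pt_const; intros u v; auto].
  apply (continuity_pt_comp (fun s => 2 * PI * clamp (-/8) (/8) s) tan).
  - apply continuity_pt_mult. apply continuity_pt_const; intros u v; auto. apply clamp_cont.
  - apply derivable_continuous_pt, derivable_pt_tan. pose proof (clamp_in (-/8) (/8) t ltac:(lra)).
    pose proof PI_RGT_0. split; nra.
Qed.

Lemma tan_quarter_bound th : - (PI / 4) <= th <= PI / 4 -> -1 <= tan th <= 1.
Proof. intros H. destruct (cos_dominates_quarter th H) as [H1 H2]. unfold tan. apply Rabs_le_between in H2.
  split; [apply Rmult_le_reg_r with (cos th)| apply Rmult_le_reg_r with (cos th)]; auto;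
  unfold Rdiv; rewrite Rmult_assoc, Rinv_l; lra. Qed.

Lemma is_arg_var_square_right_edge (g : C -> C) (al : C) h : locally_lipschitz g -> 0 < h ->
  segment_nonvanishing g (fst al + h, snd al - h) (fst al + h, snd al + h) ->
  is_arg_var (fun t => g (square_loop al h t)) (-/8) (/8) (segment_arg g (fst al + h,
    snd al - h) (fst al + h, snd al + h)).
Proof.
  intros Hg Hh Hnz. pose proof PI_RGT_0 as HPI.
  pose proof (segment_arg_spec _ _ _ Hg Hnz) as H.
  pose proof (is_arg_var_reparam _ _ _ _ square_edge_reparam (-/8)
    (/8) H continuity_pt_square_edge_reparam) as H2.
  eapply is_arg_var_ext. apply H2.
  - lra.
  - unfold square_edge_reparam. rewrite clamp_id by lra. replace (2 * PI * - / 8) with (- (PI/4)) by field.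
    rewrite tan_neg, tan_PI4. field.
  - unfold square_edge_reparam. rewrite clamp_id by lra. replace (2 * PI * / 8) with (PI/4) by field.
    rewrite tan_PI4. field.
  - intros t Ht. unfold square_edge_reparam. rewrite clamp_id by lra.
    pose proof (tan_quarter_bound (2 * PI * t) ltac:(split; nra)). lra.
  - intros t Ht. simpl. f_equal. unfold square_edge_reparam. rewrite clamp_id by lra.
    destruct (cos_dominates_quarter (2 * PI * t) ltac:(split; nra)) as [Hc Hs].
    unfold square_loop, segment. rewrite max_abs_cos_sin_cos by (rewrite (Rabs_right (cos _)); lra).
    rewrite Rabs_right by lra. unfold cis, tan. destruct al as [ax ay]. apply C_ext; simpl; field; lra.
Qed.

Definition rot90 (al u : C) : C := Cplus al (Cmult (0, 1) (Cminus u al)).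

Lemma Cmod_mul_Ci (z : C) : Cmod (Cmult (0, 1) z) = Cmod z.
Proof. rewrite Cmod_mult. replace (Cmod (0,1)) with 1. ring. unfold Cmod; simpl.
  replace (0 * (0 * 1) + 1 * (1 * 1)) with 1 by ring. rewrite sqrt_1; auto. Qed.

Lemma rot90_sub al u v : Cminus (rot90 al u) (rot90 al v) = Cmult (0, 1) (Cminus u v).
Proof. unfold rot90. ring. Qed.

Lemma locally_lipschitz_rot90 f al : locally_lipschitz f -> locally_lipschitz (fun u => f (rot90 al u)).
Proof.
  intros Hf B. destruct (Hf (2 * Cmod al + B)) as [L [HL HLs]]. exists L; split; auto.
  intros u v Hu Hv.
  assert (Hr : forall w, Cmod w <= B -> Cmod (rot90 al w) <= 2 * Cmod al + B).
  { intros w Hw. unfold rot90. eapply Rle_trans. apply Cmod_triangle. rewrite Cmod_mul_Ci.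
    eapply Rle_trans. apply Rplus_le_compat_l. apply (Cmod_triangle w (Copp al)). rewrite Cmod_opp. lra. }
  eapply Rle_trans. apply HLs; auto. rewrite rot90_sub, Cmod_mul_Ci. lra.
Qed.

Lemma rot90_segment al z w s : rot90 al (segment z w s) = segment (rot90 al z) (rot90 al w) s.
Proof. unfold rot90, segment. ring. Qed.

Lemma segment_arg_rot90 f al z w :
  segment_arg (fun u => f (rot90 al u)) z w = segment_arg f (rot90 al z) (rot90 al w).
Proof. unfold segment_arg. apply arg_var_ext. intro t. rewrite rot90_segment; auto. Qed.

Lemma square_loop_quarter_turn al h t : square_loop al h (t + /4) = rot90 al (square_loop al h t).
Proof.
  unfold square_loop, rot90. replace (2 * PI * (t + /4)) with (2 * PI * t + PI / 2) by field.
  rewrite max_abs_cos_sin_add_PI2. unfold cis. rewrite cos_add_PI2, sin_add_PI2. apply C_ext; simpl; ring.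
Qed.

Lemma square_loop_periodic al h t : square_loop al h (t + 1) = square_loop al h t.
Proof.
  unfold square_loop. replace (2 * PI * (t + 1)) with (2 * PI * t + 2 * INR 1 * PI) by (simpl; field).
  unfold max_abs_cos_sin, cis. rewrite cos_period, sin_period. auto.
Qed.

Definition isolated_in_square (f : C -> C) (al : C) (h : R) : Prop :=
  forall x y, Rabs (x - fst al) <= h -> Rabs (y - snd al) <= h -> (x, y) <> al -> f (x, y) <> RtoC 0.

Lemma isolated_in_square_rot90 f al h : isolated_in_square f al h ->
  isolated_in_square (fun u => f (rot90 al u)) al h.
Proof.
  intros H x y Hx Hy Hne. destruct al as [ax ay]; simpl in *.
  assert (E : rot90 (ax, ay) (x, y) = (ax - (y - ay), ay + (x - ax))) by (unfold rot90; apply C_ext; simpl;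
    ring).
  rewrite E. apply H; cbn [fst snd].
  - replace (ax - (y - ay) - ax) with (- (y - ay)) by ring. rewrite Rabs_Ropp; auto.
  - replace (ay + (x - ax) - ay) with (x - ax) by ring. auto.
  - intro E2. inversion E2. apply Hne. f_equal; lra.
Qed.

Lemma max_abs_cos_sin_le_1 th : max_abs_cos_sin th <= 1.
Proof.
  unfold max_abs_cos_sin. pose proof (sin2_cos2 th).
  pose proof (Rsqr_abs (cos th)). pose proof (Rsqr_abs (sin th)). unfold Rsqr in *.
  pose proof (Rabs_pos (cos th)). pose proof (Rabs_pos (sin th)).
  unfold Rabs at 3; destruct Rcase_abs; nra.
Qed.

Lemma isolated_in_square_polar f al h rho th : isolated_in_square f al h -> 0 < rho ->
  rho * max_abs_cos_sin th <= h -> f (Cplus al (Cmult (RtoC rho) (cis th))) <> RtoC 0.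
Proof.
  intros HS Hrho Hle. destruct (max_abs_cos_sin_ge th) as [M1 M2].
  destruct al as [ax ay]. unfold cis.
  replace (Cplus (ax, ay) (Cmult (RtoC rho) (cos th, sin th)))
    with ((ax + rho * cos th, ay + rho * sin th) : C) by (apply C_ext; simpl; ring).
  apply HS; cbn [fst snd].
  - replace (ax + rho * cos th - ax) with (rho * cos th) by ring.
    rewrite Rabs_mult, Rabs_right by lra. nra.
  - replace (ay + rho * sin th - ay) with (rho * sin th) by ring.
    rewrite Rabs_mult, Rabs_right by lra. nra.
  - intro E. inversion E as [[E1 E2]]. pose proof (sin2_cos2 th). unfold Rsqr in *.
    assert (rho * cos th = 0) by lra. assert (rho * sin th = 0) by lra.
    apply Rmult_integral in H0. apply Rmult_integral in H1. destruct H0, H1; nra.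
Qed.

Lemma square_loop_nonvanishing f al h t : isolated_in_square f al h -> 0 < h ->
  f (square_loop al h t) <> RtoC 0.
Proof.
  intros HS Hh. pose proof (max_abs_cos_sin_pos (2 * PI * t)).
  apply (isolated_in_square_polar f al h); auto. apply Rdiv_lt_0_compat; lra. right; field; lra.
Qed.

Lemma is_arg_var_shift G a b c X : is_arg_var (fun t => G (t + c)) a b X -> is_arg_var G (a + c) (b + c) X.
Proof.
  intros H. pose proof (is_arg_var_reparam _ _ _ _ (fun t => t - c) (a + c) (b + c) H) as H2.
  eapply is_arg_var_ext. apply H2.
  - intro t. apply continuity_pt_minus. apply continuity_pt_id. apply continuity_pt_const; intros u v; auto.
  - destruct H; lra.
  - ring.
  - ring.
  - intros; lra.
  - intros t _. simpl. f_equal. ring.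
Qed.

Lemma is_arg_var_square_quarter g al h : locally_lipschitz g -> 0 < h -> isolated_in_square g al h ->
  is_arg_var (fun t => g (square_loop al h t)) (-/8) (/8) (segment_arg g (fst al + h,
    snd al - h) (fst al + h, snd al + h)).
Proof.
  intros Hg Hh HS. apply is_arg_var_square_right_edge; auto.
  intros s Hs. destruct al as [ax ay]; simpl. rewrite segment_vertical. apply HS; simpl.
  - replace (ax + h - ax) with h by ring. rewrite Rabs_right; lra.
  - apply Rabs_le. split; nra.
  - intro E; inversion E. lra.
Qed.

Definition square_corner (al : C) (h : R) (j : nat) : C :=
  Nat.iter j (rot90 al) (fst al + h, snd al - h).

(* Turning the square a quarter turn about its centre shifts the loop by a
   quarter period, so every quarter reduces to the right edge. *)
Lemma is_arg_var_square_quarter_turn al h j : 0 < h -> forall f, locally_lipschitz f ->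
  isolated_in_square f al h ->
  is_arg_var (fun t => f (square_loop al h t)) (-/8 + INR j / 4) (/8 + INR j / 4)
    (segment_arg f (square_corner al h j) (square_corner al h (S j))).
Proof.
  intros Hh. induction j as [|j IH]; intros f Hf HS.
  - rewrite INR_0. replace (-/8 + 0 / 4) with (-/8) by field. replace (/8 + 0 / 4) with (/8) by field.
    replace (square_corner al h 1) with ((fst al + h, snd al + h) : C)
      by (unfold square_corner, rot90; simpl; apply C_ext; simpl; ring).
    apply is_arg_var_square_quarter; auto.
  - rewrite S_INR. replace (-/8 + (INR j + 1) / 4) with (-/8 + INR j / 4 + /4) by field.
    replace (/8 + (INR j + 1) / 4) with (/8 + INR j / 4 + /4) by field.
    apply is_arg_var_shift. eapply is_arg_var_ext.
    + change (square_corner al h (S (S j))) with (rot90 al (square_corner al h (S j))).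
      change (square_corner al h (S j)) with (rot90 al (square_corner al h j)) at 1.
      rewrite <- segment_arg_rot90.
      apply IH; [apply locally_lipschitz_rot90 | apply isolated_in_square_rot90]; auto.
    + intros t _. rewrite square_loop_quarter_turn. reflexivity.
Qed.

Lemma square_loop_arg_var f al h : locally_lipschitz f -> 0 < h -> isolated_in_square f al h ->
  arg_var (fun t => f (square_loop al h t)) 0 1 = rect_arg f (fst al - h) (fst al + h) (snd al - h)
    (snd al + h).
Proof.
  intros Hf Hh HS.
  set (G := fun t => f (square_loop al h t)).
  assert (HG : ccontinuous G) by (intro t; apply ccontinuity_pt_lipschitz_comp; auto;
    apply square_loop_ccontinuous).
  assert (HnzG : forall a b, nonvanishing G a b) by (intros a b t _; apply square_loop_nonvanishing; auto).
  assert (Q : forall j, arg_var G (-/8 + INR j / 4) (/8 + INR j / 4)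
                        = segment_arg f (square_corner al h j) (square_corner al h (S j)))
    by (intro j; apply arg_var_eq, is_arg_var_square_quarter_turn; auto).
  pose proof (Q 0%nat) as Q0. pose proof (Q 1%nat) as Q1. pose proof (Q 2%nat) as Q2.
    pose proof (Q 3%nat) as Q3.
  simpl INR in Q0, Q1, Q2, Q3.
  replace (-/8 + 0 / 4) with (-/8) in Q0 by field. replace (/8 + 0 / 4) with (/8) in Q0 by field.
  replace (-/8 + 1 / 4) with (/8) in Q1 by field. replace (/8 + 1 / 4) with (3/8) in Q1 by field.
  replace (-/8 + (1 + 1) / 4) with (3/8) in Q2 by field.
    replace (/8 + (1 + 1) / 4) with (5/8) in Q2 by field.
  replace (-/8 + (1 + 1 + 1) / 4) with (5/8) in Q3 by field.
  replace (/8 + (1 + 1 + 1) / 4) with (7/8) in Q3 by field.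
  assert (C1 : square_corner al h 1 = (fst al + h, snd al + h)).
  { destruct al; unfold square_corner, rot90; simpl; apply C_ext; simpl; ring. }
  assert (C2 : square_corner al h 2 = (fst al - h, snd al + h)).
  { destruct al; unfold square_corner, rot90; simpl; apply C_ext; simpl; ring. }
  assert (C3 : square_corner al h 3 = (fst al - h, snd al - h)).
  { destruct al; unfold square_corner, rot90; simpl; apply C_ext; simpl; ring. }
  assert (C4 : square_corner al h 4 = (fst al + h, snd al - h)).
  { destruct al; unfold square_corner, rot90; simpl; apply C_ext; simpl; ring. }
  change (square_corner al h 0) with ((fst al + h, snd al - h) : C) in Q0.
  rewrite C1 in Q0, Q1. rewrite C2 in Q1, Q2. rewrite C3 in Q2, Q3. rewrite C4 in Q3.
  assert (Hper : arg_var G (7/8) 1 = arg_var G (-/8) 0).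
  { apply arg_var_eq. replace (7/8) with (-/8 + 1) by field. replace 1 with (0 + 1) at 2 by ring.
    apply is_arg_var_shift. eapply is_arg_var_ext. apply arg_var_spec; auto. lra.
    intros t _. unfold G. rewrite square_loop_periodic; auto. }
  rewrite (arg_var_add G 0 (/8) 1), (arg_var_add G (/8) (3/8) 1), (arg_var_add G (3/8) (5/8) 1),
    (arg_var_add G (5/8) (7/8) 1); try lra; auto.
  rewrite (arg_var_add G (-/8) 0 (/8)) in Q0; try lra; auto.
  unfold rect_arg. lra.
Qed.

Lemma circle_degree_of_is_arg_var g a r d : is_arg_var (fun t => g (circ a r t)) 0 1 (2 * PI * IZR d) ->
  circle_degree g a r d.
Proof. intros [_ [Hnz [th [[Hc Hl] E]]]]. split; auto. exists th. split; auto. Qed.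

Lemma is_arg_var_of_circle_degree g a r d : circle_degree g a r d ->
  is_arg_var (fun t => g (circ a r t)) 0 1 (2 * PI * IZR d).
Proof. intros [Hnz [th [Hc [Hl E]]]]. split; [lra|]. split; auto. exists th. split; auto. split; auto. Qed.

Lemma has_sm_uniq g a k1 k2 : has_sm g a k1 -> has_sm g a k2 -> k1 = k2.
Proof.
  intros [r1 [Hr1 H1]] [r2 [Hr2 H2]].
  set (r := Rmin r1 r2 / 2).
  assert (0 < r < r1) by (unfold r; pose proof (Rmin_l r1 r2); pose proof (Rmin_pos r1 r2 Hr1 Hr2); lra).
  assert (0 < r < r2) by (unfold r; pose proof (Rmin_r r1 r2); pose proof (Rmin_pos r1 r2 Hr1 Hr2); lra).
  pose proof (is_arg_var_uniq _ _ _ _ _ (is_arg_var_of_circle_degree _ _ _ _ (H1 r H))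
    (is_arg_var_of_circle_degree _ _ _ _ (H2 r H0))).
  pose proof PI_RGT_0. apply eq_IZR. nra.
Qed.

Lemma sm_eq g a k : has_sm g a k -> sm g a = k.
Proof. intros H. unfold sm. apply (has_sm_uniq g a). apply epsilon_spec. exists k; auto. auto. Qed.

Lemma circ_closed a r : circ a r 0 = circ a r 1.
Proof. unfold circ. rewrite Rmult_0_r, Rmult_1_r, cos_0, sin_0, cos_2PI, sin_2PI. auto. Qed.

Definition circle_square_homotopy (al : C) (r h s t : R) : C :=
  Cplus al (Cmult (RtoC ((1 - s) * r + s * (h / max_abs_cos_sin (2 * PI * t)))) (cis (2 * PI * t))).

Lemma circle_square_homotopy_ccontinuous al r h s : ccontinuous (circle_square_homotopy al r h s).
Proof.
  intro t. unfold circle_square_homotopy. apply ccontinuity_pt_plus. apply ccontinuity_pt_const.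
    apply ccontinuity_pt_mult; [|apply ccontinuity_pt_cis_scale].
  apply ccontinuity_pt_RtoC. apply continuity_pt_plus. apply continuity_pt_const; intros u v; auto.
  apply continuity_pt_mult. apply continuity_pt_const; intros u v; auto.
  apply continuity_pt_div. apply continuity_pt_const; intros u v; auto.
  apply (continuity_pt_comp (fun s => 2 * PI * s) max_abs_cos_sin). apply continuity_pt_mult.
  apply continuity_pt_const; intros u v; auto. apply continuity_pt_id. apply continuity_pt_max_abs_cos_sin.
  apply Rgt_not_eq, max_abs_cos_sin_pos.
Qed.

Lemma circle_square_radius_bounds r h s th : 0 < r -> 0 < h -> 0 <= s <= 1 ->
  0 < (1 - s) * r + s * (h / max_abs_cos_sin th) <= r + 2 * h.
Proof.
  intros Hr Hh Hs. pose proof (max_abs_cos_sin_ge_half th). pose proof (max_abs_cos_sin_pos th).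
  assert (0 < h / max_abs_cos_sin th <= 2 * h).
  { split. apply Rdiv_lt_0_compat; lra. apply Rmult_le_reg_r with (max_abs_cos_sin th); auto.
    unfold Rdiv; rewrite Rmult_assoc, Rinv_l; nra. }
  set (q := h / max_abs_cos_sin th) in *.
  pose proof (Rmin_l r q). pose proof (Rmin_r r q). pose proof (Rmin_pos r q ltac:(lra) ltac:(lra)).
  assert ((1 - s) * r >= (1 - s) * Rmin r q) by nra. assert (s * q >= s * Rmin r q) by nra.
  split; nra.
Qed.

Lemma Cmod_circle_square_homotopy_le al r h s t : 0 < r -> 0 < h -> 0 <= s <= 1 ->
  Cmod (circle_square_homotopy al r h s t) <= Cmod al + (r + 2 * h).
Proof.
  intros Hr Hh Hs. unfold circle_square_homotopy. eapply Rle_trans. apply Cmod_triangle.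
  rewrite Cmod_mult, Cmod_cis, Cmod_R.
  pose proof (circle_square_radius_bounds r h s (2 * PI * t) Hr Hh Hs). rewrite Rabs_right by lra. lra.
Qed.

Lemma circle_square_homotopy_sub al r h s s' t : 0 < r -> 0 < h ->
  Cmod (Cminus (circle_square_homotopy al r h s t) (circle_square_homotopy al r h s' t))
    <= (r + 2 * h) * Rabs (s - s').
Proof.
  intros Hr Hh. unfold circle_square_homotopy.
  replace (Cminus _ _) with (Cmult (RtoC ((s - s') * (h / max_abs_cos_sin (2 * PI * t) - r))) (cis
    (2 * PI * t)))
    by (apply C_ext; simpl; ring).
  rewrite Cmod_mult, Cmod_cis, Cmod_R, Rabs_mult, Rmult_1_r.
  pose proof (circle_square_radius_bounds r h 1 (2 * PI * t) Hr Hh ltac:(lra)).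
    pose proof (Rabs_pos (s - s')).
  assert (Rabs (h / max_abs_cos_sin (2 * PI * t) - r) <= r + 2 * h) by (apply Rabs_le; split; nra).
  nra.
Qed.

(* The homotopy deforms the circle of radius r into the square loop of
   half-side h without leaving the punctured square. *)
Lemma is_arg_var_circle_isolated f al h r : locally_lipschitz f -> 0 < r <= h ->
  isolated_in_square f al h ->
  is_arg_var (fun t => f (circ al r t)) 0 1 (rect_arg f (fst al - h) (fst al + h) (snd al - h)
    (snd al + h)).
Proof.
  intros Hf Hr HS. assert (Hh : 0 < h) by lra.
  set (F := fun s t => f (circle_square_homotopy al r h (1 - s) t)).
  destruct (Hf (Cmod al + (r + 2 * h))) as [L [HL HLip]].
  assert (H1 : is_arg_var (F 0) 0 1 (rect_arg f (fst al - h) (fst al + h) (snd al - h) (snd al + h))).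
  { rewrite <- square_loop_arg_var; auto. apply is_arg_var_ext with (fun t => f (square_loop al h t)).
    - apply arg_var_spec. lra. intro t; apply ccontinuity_pt_lipschitz_comp; auto;
      apply square_loop_ccontinuous.
      intros t _. apply square_loop_nonvanishing; auto.
    - intros t _. unfold F, circle_square_homotopy, square_loop.
      replace ((1 - (1 - 0)) * r + (1 - 0) * (h / max_abs_cos_sin (2 * PI * t)))
        with (h / max_abs_cos_sin (2 * PI * t)) by ring; auto. }
  eapply is_arg_var_ext. apply (is_arg_var_homotopy F (L * (r + 2 * h))); auto.
  - nra.
  - intros s t. unfold F. apply ccontinuity_pt_lipschitz_comp; auto.
    apply circle_square_homotopy_ccontinuous.
  - intros s Hs. unfold F, circle_square_homotopy.
    replace (2 * PI * 1) with (2 * PI * 0 + 2 * INR 1 * PI) by (simpl; ring).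
    unfold max_abs_cos_sin, cis. rewrite cos_period, sin_period. auto.
  - intros s s' t Hs Hs' Ht. unfold F. eapply Rle_trans.
    apply HLip; apply Cmod_circle_square_homotopy_le; lra.
    eapply Rle_trans. apply Rmult_le_compat_l; auto. apply circle_square_homotopy_sub; lra.
    replace (Rabs (1 - s - (1 - s'))) with (Rabs (s - s')) by (rewrite <- Rabs_Ropp; f_equal; ring).
    right; ring.
  - intros s t Hs Ht. unfold F, circle_square_homotopy.
    apply (isolated_in_square_polar f al h); auto. apply circle_square_radius_bounds; lra.
    pose proof (max_abs_cos_sin_le_1 (2 * PI * t)). pose proof (max_abs_cos_sin_pos (2 * PI * t)).
    set (M := max_abs_cos_sin (2 * PI * t)) in *.
    replace (((1 - (1 - s)) * r + (1 - s) * (h / M)) * M) with (s * (r * M) + (1 - s) * h)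
      by (field; lra).
    assert (r * M <= h) by nra. nra.
  - intros t _. unfold F, circle_square_homotopy, circ.
    replace ((1 - (1 - 1)) * r + (1 - 1) * (h / max_abs_cos_sin (2 * PI * t))) with r by ring; auto.
Qed.

Lemma rect_arg_square_sm f al h : locally_lipschitz f -> 0 < h -> isolated_in_square f al h ->
  rect_arg f (fst al - h) (fst al + h) (snd al - h) (snd al + h) = 2 * PI * IZR (sm f al).
Proof.
  intros Hf Hh HS.
  pose proof (is_arg_var_circle_isolated f al h h Hf ltac:(lra) HS) as H.
  destruct (is_arg_var_closed _ _ H (f_equal f (circ_closed al h))) as [k Hk].
  assert (Hsm : has_sm f al k).
  { exists h. split; auto. intros r Hr. apply circle_degree_of_is_arg_var. rewrite <- Hk.
    apply is_arg_var_circle_isolated; auto. lra. }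
  rewrite (sm_eq _ _ _ Hsm). auto.
Qed.

(** * Counting zeros in a rectangle *)

Definition zeros_listed (f : C -> C) (Z : list C) x0 x1 y0 y1 :=
  forall x y, x0 <= x <= x1 -> y0 <= y <= y1 -> f (x, y) = RtoC 0 -> In ((x, y) : C) Z.
Definition listed_inside (Z : list C) x0 x1 y0 y1 :=
  forall z, In z Z -> x0 < fst z < x1 /\ y0 < snd z < y1.

Lemma boundary_nonvanishing_listed f Z x0 x1 y0 y1 a0 a1 b0 b1 : zeros_listed f Z x0 x1 y0 y1 ->
  x0 <= a0 -> a1 <= x1 -> y0 <= b0 -> b1 <= y1 ->
  (forall z, In z Z -> ~ (a0 <= fst z <= a1 /\ b0 <= snd z <= b1 /\
       (fst z = a0 \/ fst z = a1 \/ snd z = b0 \/ snd z = b1))) ->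
  boundary_nonvanishing f a0 a1 b0 b1.
Proof.
  intros Hz ? ? ? ? HZ x y Hx Hy Hb E. apply Hz in E; try lra.
  apply (HZ _ E). simpl. auto.
Qed.

Lemma zero_free_listed f Z x0 x1 y0 y1 a0 a1 b0 b1 : zeros_listed f Z x0 x1 y0 y1 ->
  x0 <= a0 -> a1 <= x1 -> y0 <= b0 -> b1 <= y1 ->
  (forall z, In z Z -> ~ (a0 <= fst z <= a1 /\ b0 <= snd z <= b1)) ->
  forall x y, a0 <= x <= a1 -> b0 <= y <= b1 -> f (x, y) <> RtoC 0.
Proof.
  intros Hz ? ? ? ? HZ x y Hx Hy E. apply Hz in E; try lra.
  apply (HZ _ E). simpl. auto.
Qed.

Lemma exists_between_not_In (l : list R) : forall p q, p < q -> exists c, p < c < q /\ ~ In c l.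
Proof.
  induction l as [|a l IH]; intros p q Hpq.
  - exists ((p + q) / 2). split. lra. auto.
  - destruct (IH p q Hpq) as [c [Hc Hn]]. destruct (Req_dec c a) as [E|E].
    + destruct (IH p c ltac:(lra)) as [c2 [Hc2 Hn2]]. exists c2. split. lra.
      intros [E2|E2]; [lra|auto].
    + exists c. split; auto. intros [E'|E']; [lra|auto].
Qed.

Lemma SM_split f (p : C -> bool) zl : SM f zl = (SM f (filter p zl) + SM f (filter (fun z => negb
  (p z)) zl))%Z.
Proof. induction zl as [|a zl IH]; simpl; auto. destruct (p a); simpl; rewrite IH; lia. Qed.

Lemma filter_length_lt {A} (p : A -> bool) (l : list A) b : In b l -> p b = false ->
  (length (filter p l) < length l)%nat.
Proof.
  induction l as [|a l IH]; simpl; intros Hb Hp. contradiction.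
  pose proof (filter_length_le p l) as Hle. destruct Hb as [E|E].
  - subst. rewrite Hp. lia.
  - destruct (p a); simpl; specialize (IH E Hp); lia.
Qed.

Definition ltb_at (pr : C -> R) (c : R) (z : C) : bool := if Rlt_dec (pr z) c then true else false.

Lemma ltb_at_true pr c z : ltb_at pr c z = true <-> pr z < c.
Proof. unfold ltb_at. destruct Rlt_dec; split; intros; auto; try discriminate; lra. Qed.

Lemma negb_ltb_at_true pr c z : negb (ltb_at pr c z) = true <-> c <= pr z.
Proof. unfold ltb_at. destruct Rlt_dec; simpl; split; intros; auto; try discriminate; lra. Qed.

Lemma filter_ltb_at_shorter pr c zl a b n : (length zl <= S n)%nat -> In a zl -> In b zl ->
  pr a < c < pr b ->
  (length (filter (ltb_at pr c) zl) <= n)%nat /\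
  (length (filter (fun z => negb (ltb_at pr c z)) zl) <= n)%nat.
Proof.
  intros Hlen Ha Hb Hc. split.
  - assert (ltb_at pr c b = false) by (unfold ltb_at; destruct Rlt_dec; auto; lra).
    pose proof (filter_length_lt (ltb_at pr c) zl b Hb H). lia.
  - assert (negb (ltb_at pr c a) = false) by (unfold ltb_at; destruct Rlt_dec; auto; lra).
    pose proof (filter_length_lt (fun z => negb (ltb_at pr c z)) zl a Ha H). lia.
Qed.

Definition rect_arg_counts (f : C -> C) (n : nat) := forall zl, (length zl <= n)%nat -> NoDup zl ->
  forall x0 x1 y0 y1, x0 < x1 -> y0 < y1 -> zeros_listed f zl x0 x1 y0 y1 -> listed_inside zl x0 x1 y0 y1 ->
  rect_arg f x0 x1 y0 y1 = 2 * PI * IZR (SM f zl).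

(* Cut along a vertical line through no zero, separating a from b; both halves
   contain fewer zeros. *)
Lemma rect_arg_counts_split_x f n zl x0 x1 y0 y1 : rect_arg_counts f n -> locally_lipschitz f ->
  (length zl <= S n)%nat -> NoDup zl -> x0 < x1 -> y0 < y1 ->
  zeros_listed f zl x0 x1 y0 y1 -> listed_inside zl x0 x1 y0 y1 ->
  forall a b, In a zl -> In b zl -> fst a < fst b -> rect_arg f x0 x1 y0 y1 = 2 * PI * IZR (SM f zl).
Proof.
  intros IH Hf Hlen Hnd Hx Hy Hz HZ a b Ha Hb Hab.
  destruct (exists_between_not_In (map fst zl) (fst a) (fst b) Hab) as [c [Hc Hcn]].
  assert (Hnc : forall z, In z zl -> fst z <> c).
  { intros z Hzz E. apply Hcn. rewrite <- E. apply in_map; auto. }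
  pose proof (HZ a Ha). pose proof (HZ b Hb).
  destruct (filter_ltb_at_shorter fst c zl a b n Hlen Ha Hb Hc) as [L1 L2].
  rewrite (rect_arg_split_x f x0 c x1); try lra; auto.
  2,3: apply (boundary_nonvanishing_listed f zl x0 x1 y0 y1); auto; try lra;
       intros z Hzz [B1 [B2 B3]]; specialize (HZ z Hzz); specialize (Hnc z Hzz); lra.
  rewrite (IH (filter (ltb_at fst c) zl)), (IH (filter (fun z => negb (ltb_at fst c z)) zl)),
    (SM_split f (ltb_at fst c) zl), plus_IZR; try ring; auto; try apply NoDup_filter; auto; try lra.
  - intros x y Hxx Hyy E. assert (In ((x, y) : C) zl) by (apply Hz; auto; lra).
    apply filter_In. split; auto. apply negb_ltb_at_true. simpl. lra.
  - intros z Hzz. apply filter_In in Hzz as [Hzz Hp]. apply negb_ltb_at_true in Hp.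
    specialize (HZ z Hzz). specialize (Hnc z Hzz). lra.
  - intros x y Hxx Hyy E. assert (Hin : In ((x, y) : C) zl) by (apply Hz; auto; lra).
    apply filter_In. split; auto. apply ltb_at_true. specialize (Hnc _ Hin). simpl in *. lra.
  - intros z Hzz. apply filter_In in Hzz as [Hzz Hp]. apply ltb_at_true in Hp.
    specialize (HZ z Hzz). lra.
Qed.

Lemma rect_arg_counts_split_y f n zl x0 x1 y0 y1 : rect_arg_counts f n -> locally_lipschitz f ->
  (length zl <= S n)%nat -> NoDup zl -> x0 < x1 -> y0 < y1 ->
  zeros_listed f zl x0 x1 y0 y1 -> listed_inside zl x0 x1 y0 y1 ->
  forall a b, In a zl -> In b zl -> snd a < snd b -> rect_arg f x0 x1 y0 y1 = 2 * PI * IZR (SM f zl).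
Proof.
  intros IH Hf Hlen Hnd Hx Hy Hz HZ a b Ha Hb Hab.
  destruct (exists_between_not_In (map snd zl) (snd a) (snd b) Hab) as [c [Hc Hcn]].
  assert (Hnc : forall z, In z zl -> snd z <> c).
  { intros z Hzz E. apply Hcn. rewrite <- E. apply in_map; auto. }
  pose proof (HZ a Ha). pose proof (HZ b Hb).
  destruct (filter_ltb_at_shorter snd c zl a b n Hlen Ha Hb Hc) as [L1 L2].
  rewrite (rect_arg_split_y f x0 x1 y0 c y1); try lra; auto.
  2,3: apply (boundary_nonvanishing_listed f zl x0 x1 y0 y1); auto; try lra;
       intros z Hzz [B1 [B2 B3]]; specialize (HZ z Hzz); specialize (Hnc z Hzz); lra.
  rewrite (IH (filter (ltb_at snd c) zl)), (IH (filter (fun z => negb (ltb_at snd c z)) zl)),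
    (SM_split f (ltb_at snd c) zl), plus_IZR; try ring; auto; try apply NoDup_filter; auto; try lra.
  - intros x y Hxx Hyy E. assert (In ((x, y) : C) zl) by (apply Hz; auto; lra).
    apply filter_In. split; auto. apply negb_ltb_at_true. simpl. lra.
  - intros z Hzz. apply filter_In in Hzz as [Hzz Hp]. apply negb_ltb_at_true in Hp.
    specialize (HZ z Hzz). specialize (Hnc z Hzz). lra.
  - intros x y Hxx Hyy E. assert (Hin : In ((x, y) : C) zl) by (apply Hz; auto; lra).
    apply filter_In. split; auto. apply ltb_at_true. specialize (Hnc _ Hin). simpl in *. lra.
  - intros z Hzz. apply filter_In in Hzz as [Hzz Hp]. apply ltb_at_true in Hp.
    specialize (HZ z Hzz). lra.
Qed.

Lemma rect_arg_counts_nil f x0 x1 y0 y1 : locally_lipschitz f -> x0 < x1 -> y0 < y1 ->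
  zeros_listed f [] x0 x1 y0 y1 ->
  rect_arg f x0 x1 y0 y1 = 2 * PI * IZR (SM f []).
Proof.
  intros Hf Hx Hy Hz. simpl. rewrite Rmult_0_r. apply rect_arg_zero_free; auto; try lra.
Qed.

(* Cut out a small square around the zero; the four remaining pieces are
   zero-free. *)
Lemma rect_arg_counts_single f al x0 x1 y0 y1 : locally_lipschitz f -> x0 < x1 -> y0 < y1 ->
  zeros_listed f [al] x0 x1 y0 y1 ->
  listed_inside [al] x0 x1 y0 y1 -> rect_arg f x0 x1 y0 y1 = 2 * PI * IZR (SM f [al]).
Proof.
  intros Hf Hx Hy Hz HZ. destruct (HZ al (or_introl eq_refl)) as [Ax Ay].
  destruct al as [ax ay]; cbn [fst snd] in *.
  set (h := Rmin (Rmin (ax - x0) (x1 - ax)) (Rmin (ay - y0) (y1 - ay)) / 2).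
  assert (Hh : 0 < h /\ h < ax - x0 /\ h < x1 - ax /\ h < ay - y0 /\ h < y1 - ay).
  { unfold h. pose proof (Rmin_l (Rmin (ax - x0) (x1 - ax)) (Rmin (ay - y0) (y1 - ay))).
    pose proof (Rmin_r (Rmin (ax - x0) (x1 - ax)) (Rmin (ay - y0) (y1 - ay))).
    pose proof (Rmin_l (ax - x0) (x1 - ax)). pose proof (Rmin_r (ax - x0) (x1 - ax)).
    pose proof (Rmin_l (ay - y0) (y1 - ay)). pose proof (Rmin_r (ay - y0) (y1 - ay)).
    assert (0 < Rmin (Rmin (ax - x0) (x1 - ax)) (Rmin (ay - y0) (y1 - ay))).
    { apply Rmin_pos; apply Rmin_pos; lra. } lra. }
  destruct Hh as [H0 [H1 [H2 [H3 H4]]]].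
  assert (NB : forall a0 a1 b0 b1, x0 <= a0 -> a1 <= x1 -> y0 <= b0 -> b1 <= y1 ->
     ~ (a0 <= ax <= a1 /\ b0 <= ay <= b1 /\ (ax = a0 \/ ax = a1 \/ ay = b0 \/ ay = b1)) ->
     boundary_nonvanishing f a0 a1 b0 b1).
  { intros. apply (boundary_nonvanishing_listed f [(ax, ay)] x0 x1 y0 y1); auto. intros z [<-|[]]; auto. }
  assert (ZF : forall a0 a1 b0 b1, x0 <= a0 <= a1 -> a1 <= x1 -> y0 <= b0 <= b1 -> b1 <= y1 ->
     ~ (a0 <= ax <= a1 /\ b0 <= ay <= b1) -> rect_arg f a0 a1 b0 b1 = 0).
  { intros. apply rect_arg_zero_free; auto; try lra.
    apply (zero_free_listed f [(ax, ay)] x0 x1 y0 y1); auto; try lra.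
    intros z [<-|[]]; auto. }
  rewrite (rect_arg_split_x f x0 (ax - h) x1); try lra; auto; try (apply NB; lra).
  rewrite (rect_arg_split_x f (ax - h) (ax + h) x1); try lra; auto; try (apply NB; lra).
  rewrite (rect_arg_split_y f (ax - h) (ax + h) y0 (ay - h) y1); try lra; auto; try (apply NB; lra).
  rewrite (rect_arg_split_y f (ax - h) (ax + h) (ay - h) (ay + h) y1); try lra; auto; try (apply NB; lra).
  rewrite (ZF x0 (ax - h) y0 y1), (ZF (ax + h) x1 y0 y1), (ZF (ax - h) (ax + h) y0 (ay - h)),
    (ZF (ax - h) (ax + h) (ay + h) y1); try lra.
  pose proof (rect_arg_square_sm f (ax, ay) h Hf H0) as Hs. cbn [fst snd] in Hs. rewrite Hs.
  - simpl. rewrite Z.add_0_r. ring.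
  - intros x y Hxx Hyy Hne E. apply Rabs_le_between in Hxx. apply Rabs_le_between in Hyy.
    cbn [fst snd] in *.
    apply Hz in E; try lra. destruct E as [E|[]]. auto.
Qed.

(* Induction on the number of zeros: two zeros are separated by an
   axis-parallel cut, a single one is enclosed in a small square. *)
Lemma rect_arg_counts_all f : locally_lipschitz f -> forall n, rect_arg_counts f n.
Proof.
  intros Hf n. induction n as [|n IH]; intros zl Hlen Hnd x0 x1 y0 y1 Hx Hy Hz HZ.
  - destruct zl; simpl in Hlen; [|lia]. apply rect_arg_counts_nil; auto.
  - destruct zl as [|a [|b rest]].
    + apply rect_arg_counts_nil; auto.
    + apply rect_arg_counts_single; auto.
    + assert (Hab : a <> b) by (inversion Hnd; subst; intro E; subst; apply H1; left; auto).
      assert (Ina : In a (a :: b :: rest)) by (left; auto).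
      assert (Inb : In b (a :: b :: rest)) by (right; left; auto).
      destruct (Rtotal_order (fst a) (fst b)) as [Hlt|[Heq|Hgt]].
      * apply (rect_arg_counts_split_x f n _ x0 x1 y0 y1 IH Hf Hlen Hnd Hx Hy Hz HZ a b); auto.
      * destruct (Rtotal_order (snd a) (snd b)) as [Hlt'|[Heq'|Hgt']].
        -- apply (rect_arg_counts_split_y f n _ x0 x1 y0 y1 IH Hf Hlen Hnd Hx Hy Hz HZ a b); auto.
        -- exfalso. apply Hab. destruct a, b; simpl in *; subst; auto.
        -- apply (rect_arg_counts_split_y f n _ x0 x1 y0 y1 IH Hf Hlen Hnd Hx Hy Hz HZ b a); auto.
      * apply (rect_arg_counts_split_x f n _ x0 x1 y0 y1 IH Hf Hlen Hnd Hx Hy Hz HZ b a); auto.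
Qed.

(** * Mixed polynomials *)

Lemma locally_lipschitz_bounded f : locally_lipschitz f ->
  forall B, exists M, 0 <= M /\ forall u, Cmod u <= B -> Cmod (f u) <= M.
Proof.
  intros Hf B. destruct (Hf (Rmax B 0)) as [L [HL HLs]]. exists (Cmod (f (RtoC 0)) + L * Rmax B 0).
  split. pose proof (Cmod_ge_0 (f (RtoC 0))). pose proof (Rmax_r B 0). nra.
  intros u Hu. pose proof (Rmax_l B 0). pose proof (Rmax_r B 0).
  assert (Cmod (Cminus (f u) (f (RtoC 0))) <= L * Rmax B 0).
  { eapply Rle_trans. apply HLs; try lra. rewrite Cmod_0; lra.
    replace (Cminus u (RtoC 0)) with u by ring. apply Rmult_le_compat_l; lra. }
  pose proof (Cmod_triangle (Cminus (f u) (f (RtoC 0))) (f (RtoC 0))).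
  replace (Cplus (Cminus (f u) (f (RtoC 0))) (f (RtoC 0))) with (f u) in H2 by ring. lra.
Qed.

Lemma locally_lipschitz_const (c : C) : locally_lipschitz (fun _ => c).
Proof. intros B. exists 0. split; [lra|]. intros. replace (Cminus c c) with (RtoC 0) by ring.
  rewrite Cmod_0. pose proof (Cmod_ge_0 (Cminus u v)). lra. Qed.

Lemma locally_lipschitz_id : locally_lipschitz (fun u => u).
Proof. intros B. exists 1. split; [lra|]. intros. lra. Qed.

Lemma locally_lipschitz_conj : locally_lipschitz Cconj.
Proof. intros B. exists 1. split; [lra|]. intros. rewrite <- Cminus_conj, Cmod_conj. lra. Qed.

Lemma locally_lipschitz_plus f g : locally_lipschitz f -> locally_lipschitz g ->
  locally_lipschitz (fun u => Cplus (f u) (g u)).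
Proof.
  intros Hf Hg B. destruct (Hf B) as [L1 [H1 H1s]]. destruct (Hg B) as [L2 [H2 H2s]].
  exists (L1 + L2). split; [lra|]. intros u v Hu Hv.
  replace (Cminus (Cplus (f u) (g u)) (Cplus (f v) (g v)))
    with (Cplus (Cminus (f u) (f v)) (Cminus (g u) (g v))) by ring.
  eapply Rle_trans. apply Cmod_triangle. specialize (H1s u v Hu Hv). specialize (H2s u v Hu Hv). lra.
Qed.

Lemma locally_lipschitz_mult f g : locally_lipschitz f -> locally_lipschitz g ->
  locally_lipschitz (fun u => Cmult (f u) (g u)).
Proof.
  intros Hf Hg B. destruct (Hf B) as [L1 [H1 H1s]]. destruct (Hg B) as [L2 [H2 H2s]].
  destruct (locally_lipschitz_bounded f Hf B) as [M1 [HM1 HM1s]].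
    destruct (locally_lipschitz_bounded g Hg B) as [M2 [HM2 HM2s]].
  exists (M1 * L2 + M2 * L1). split; [nra|]. intros u v Hu Hv.
  replace (Cminus (Cmult (f u) (g u)) (Cmult (f v) (g v))) with
    (Cplus (Cmult (f u) (Cminus (g u) (g v))) (Cmult (g v) (Cminus (f u) (f v)))) by ring.
  eapply Rle_trans. apply Cmod_triangle. rewrite !Cmod_mult.
  specialize (H1s u v Hu Hv). specialize (H2s u v Hu Hv). specialize (HM1s u Hu). specialize (HM2s v Hv).
  pose proof (Cmod_ge_0 (f u)). pose proof (Cmod_ge_0 (g v)).
  pose proof (Cmod_ge_0 (Cminus (g u) (g v))). pose proof (Cmod_ge_0 (Cminus (f u) (f v))).
  pose proof (Cmod_ge_0 (Cminus u v)).
  assert (Cmod (f u) * Cmod (Cminus (g u) (g v)) <= M1 * (L2 * Cmod (Cminus u v)))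
    by (apply Rmult_le_compat; auto).
  assert (Cmod (g v) * Cmod (Cminus (f u) (f v)) <= M2 * (L1 * Cmod (Cminus u v)))
    by (apply Rmult_le_compat; auto).
  nra.
Qed.

Lemma locally_lipschitz_pow f n : locally_lipschitz f -> locally_lipschitz (fun u => Cpow (f u) n).
Proof. intros Hf. induction n; simpl. apply locally_lipschitz_const.
  apply locally_lipschitz_mult; auto. Qed.

Lemma locally_lipschitz_csum n (F : nat -> C -> C) : (forall k, locally_lipschitz (F k)) ->
  locally_lipschitz (fun u => csum n (fun k => F k u)).
Proof. intros H. induction n; simpl. apply H. apply locally_lipschitz_plus; auto. Qed.

Lemma locally_lipschitz_feval c N : locally_lipschitz (feval c N).
Proof.
  unfold feval. apply (locally_lipschitz_csum N (fun nu u => csum N (fun mu => Cmult (c nu mu) (Cmult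
    (Cpow u nu) (Cpow (Cconj u) mu))))).
  intro nu. apply (locally_lipschitz_csum N (fun mu u => Cmult (c nu mu) (Cmult (Cpow u nu) (Cpow
    (Cconj u) mu)))).
  intro mu. apply locally_lipschitz_mult. apply locally_lipschitz_const. apply locally_lipschitz_mult.
    apply locally_lipschitz_pow, locally_lipschitz_id.
  apply locally_lipschitz_pow, locally_lipschitz_conj.
Qed.

Lemma locally_lipschitz_fhom c N l : locally_lipschitz (fhom c N l).
Proof.
  unfold fhom. apply (locally_lipschitz_csum N (fun nu u => csum N (fun mu => if Nat.eqb (nu + mu) l
     then Cmult (c nu mu) (Cmult (Cpow u nu) (Cpow (Cconj u) mu)) else RtoC 0))).
  intro nu. apply (locally_lipschitz_csum N (fun mu u => if Nat.eqb (nu + mu) l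
     then Cmult (c nu mu) (Cmult (Cpow u nu) (Cpow (Cconj u) mu)) else RtoC 0)).
  intro mu. destruct (Nat.eqb (nu + mu) l). 
  apply locally_lipschitz_mult. apply locally_lipschitz_const. apply locally_lipschitz_mult.
    apply locally_lipschitz_pow, locally_lipschitz_id.
  apply locally_lipschitz_pow, locally_lipschitz_conj. apply locally_lipschitz_const.
Qed.

Lemma circ_ccontinuous a r : ccontinuous (circ a r).
Proof. intro t. unfold circ. apply ccontinuity_pt_plus. apply ccontinuity_pt_const.
  apply ccontinuity_pt_mult. apply ccontinuity_pt_const.
  apply (ccontinuity_pt_cis_scale (2 * PI) t). Qed.

Lemma comp_circ_ccontinuous G a r : locally_lipschitz G -> ccontinuous (fun t => G (circ a r t)).
Proof. intros HG t. apply ccontinuity_pt_lipschitz_comp; auto. apply circ_ccontinuous. Qed.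

Lemma Cmod_circ_origin r t : 0 <= r -> Cmod (circ (RtoC 0) r t) = r.
Proof. intros Hr. unfold circ. replace (Cplus (RtoC 0) (Cmult (RtoC r) (cos (2 * PI * t),
  sin (2 * PI * t))))
  with (Cmult (RtoC r) (cis (2 * PI * t))) by (unfold cis; ring).
  rewrite Cmod_mult, Cmod_cis, Cmod_R, Rabs_right; lra. Qed.

Lemma is_arg_var_circ r : 0 < r -> is_arg_var (fun t => circ (RtoC 0) r t) 0 1 (2 * PI).
Proof.
  intros Hr. split; [lra|]. split.
  - intros t _ E. pose proof (Cmod_circ_origin r t ltac:(lra)). rewrite E, Cmod_0 in H. lra.
  - exists (fun t => 2 * PI * t). split; [split|].
    + intro t. apply continuity_pt_mult. apply continuity_pt_const; intros u v; auto.
      apply continuity_pt_id.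
    + intros t _. rewrite Cmod_circ_origin by lra. unfold circ, cis. apply C_ext; simpl; ring.
    + ring.
Qed.

Lemma is_arg_var_pow g a b x n : is_arg_var g a b x -> is_arg_var (fun t => Cpow (g t) n) a b (INR n * x).
Proof.
  intros H. induction n.
  - simpl. replace (0 * x) with 0 by ring. apply is_arg_var_const. destruct H; auto.
    intro E. inversion E. lra.
  - rewrite S_INR. replace ((INR n + 1) * x) with (x + INR n * x) by ring.
    apply (is_arg_var_mult g (fun t => Cpow (g t) n)); auto.
Qed.

Lemma is_arg_var_circ_conj r : 0 < r -> is_arg_var (fun t => Cconj (circ (RtoC 0) r t)) 0 1 (- (2 * PI)).
Proof. intros. apply (is_arg_var_conj (fun t => circ (RtoC 0) r t)). apply is_arg_var_circ; auto. Qed.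

(* By Rouché, u + g conj u winds like u when |g| < 1 and like g conj u when
   |g| > 1. *)
Lemma is_arg_var_linear_factor (g : C) r : 0 < r -> Cmod g <> 1 ->
  is_arg_var (fun t => Cplus (circ (RtoC 0) r t) (Cmult g (Cconj (circ (RtoC 0) r t)))) 0 1
    (2 * PI * IZR (eps g)).
Proof.
  intros Hr Hg.
  assert (Hc : ccontinuous (fun t => Cplus (circ (RtoC 0) r t) (Cmult g (Cconj (circ (RtoC 0) r t))))).
  { apply (comp_circ_ccontinuous (fun u => Cplus u (Cmult g (Cconj u)))).
    apply locally_lipschitz_plus. apply locally_lipschitz_id.
    apply locally_lipschitz_mult. apply locally_lipschitz_const. apply locally_lipschitz_conj. }
  unfold eps. destruct (Rlt_dec (Cmod g) 1) as [Hlt|Hge].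
  - replace (2 * PI * IZR 1) with (2 * PI) by (simpl; ring).
    apply is_arg_var_rouche_loop with (fun t => circ (RtoC 0) r t); auto.
    + apply is_arg_var_circ; auto.
    + apply circ_ccontinuous.
    + apply circ_closed.
    + rewrite circ_closed; auto.
    + intros t _. replace (Cminus (Cplus (circ (RtoC 0) r t) (Cmult g (Cconj (circ (RtoC 0) r t)))) (circ
      (RtoC 0) r t))
        with (Cmult g (Cconj (circ (RtoC 0) r t))) by ring.
      rewrite Cmod_mult, Cmod_conj, Cmod_circ_origin by lra. pose proof (Cmod_ge_0 g). nra.
  - destruct (Rgt_dec (Cmod g) 1) as [Hgt|Hn]; [|exfalso; lra].
    replace (2 * PI * IZR (-1)) with (0 + - (2 * PI)) by (simpl; ring).
    apply is_arg_var_rouche_loop with (fun t => Cmult g (Cconj (circ (RtoC 0) r t))); auto.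
    + apply (is_arg_var_mult (fun _ => g) (fun t => Cconj (circ (RtoC 0) r t))).
      apply is_arg_var_const. lra. intro E. rewrite E, Cmod_0 in Hgt. lra. apply is_arg_var_circ_conj; auto.
    + apply (comp_circ_ccontinuous (fun u => Cmult g (Cconj u))).
      apply locally_lipschitz_mult. apply locally_lipschitz_const. apply locally_lipschitz_conj.
    + rewrite circ_closed; auto.
    + rewrite circ_closed; auto.
    + intros t _. replace (Cminus (Cplus (circ (RtoC 0) r t) (Cmult g (Cconj (circ (RtoC 0) r t))))
      (Cmult g (Cconj (circ (RtoC 0) r t))))
        with (circ (RtoC 0) r t) by ring.
      rewrite Cmod_mult, Cmod_conj, Cmod_circ_origin by lra. nra.
Qed.

Definition eps_weight_sum (fac : list (C * nat)%type) : Z :=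
  fold_right (fun gn acc => (eps (fst gn) * Z.of_nat (snd gn) + acc)%Z) 0%Z fac.

Lemma is_arg_var_factor_product fac r : 0 < r -> admissible_fac fac ->
  is_arg_var (fun t => fold_right (fun gn acc =>
        Cmult (Cpow (Cplus (circ (RtoC 0) r t) (Cmult (fst gn) (Cconj (circ (RtoC 0) r t)))) (snd gn)) acc)
      (RtoC 1) fac) 0 1 (2 * PI * IZR (eps_weight_sum fac)).
Proof.
  intros Hr Had. induction fac as [|[g n] fac IH]; simpl.
  - replace (2 * PI * 0) with 0 by ring. apply is_arg_var_const. lra. intro E; inversion E; lra.
  - inversion Had as [|? ? Hg Hrest]; subst. simpl in Hg.
    pose proof (is_arg_var_pow _ _ _ _ n (is_arg_var_linear_factor g r Hr Hg)) as A.
    specialize (IH Hrest).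
    replace (2 * PI * IZR (eps g * Z.of_nat n + eps_weight_sum fac)) with
      (INR n * (2 * PI * IZR (eps g)) + 2 * PI * IZR (eps_weight_sum fac))
      by (rewrite plus_IZR, mult_IZR, <- INR_IZR_INZ; ring).
    apply (is_arg_var_mult _ (fun t => fold_right _ (RtoC 1) fac)); auto.
Qed.

Lemma is_arg_var_factored k p q fac r : 0 < r -> k <> RtoC 0 -> admissible_fac fac ->
  is_arg_var (fun t => factored k p q fac (circ (RtoC 0) r t)) 0 1 (2 * PI * IZR (index_of_fac p q fac)).
Proof.
  intros Hr Hk Had. unfold factored.
  replace (2 * PI * IZR (index_of_fac p q fac)) with
    ((0 + (INR p * (2 * PI) + INR q * (- (2 * PI)))) + 2 * PI * IZR (eps_weight_sum fac)).
  2: { unfold index_of_fac, eps_weight_sum. rewrite !plus_IZR, minus_IZR, <- !INR_IZR_INZ. ring. }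
  apply (is_arg_var_mult (fun t => Cmult k (Cmult (Cpow (circ (RtoC 0) r t) p) (Cpow (Cconj (circ
    (RtoC 0) r t)) q)))).
  - apply (is_arg_var_mult (fun _ => k)). apply is_arg_var_const; auto. lra.
    apply (is_arg_var_mult (fun t => Cpow (circ (RtoC 0) r t) p)).
    apply (is_arg_var_pow (fun t => circ (RtoC 0) r t)). apply is_arg_var_circ; auto.
    apply (is_arg_var_pow (fun t => Cconj (circ (RtoC 0) r t))). apply is_arg_var_circ_conj; auto.
  - apply is_arg_var_factor_product; auto.
Qed.

Fixpoint rsum (n : nat) (F : nat -> R) : R :=
  match n with O => F O | S k => rsum k F + F (S k) end.

Lemma csum_minus n F G : Cminus (csum n F) (csum n G) = csum n (fun k => Cminus (F k) (G k)).
Proof. induction n; simpl; auto. rewrite <- IHn. ring. Qed.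

Lemma Cmod_csum n F : Cmod (csum n F) <= rsum n (fun k => Cmod (F k)).
Proof. induction n; simpl. lra. eapply Rle_trans. apply Cmod_triangle. lra. Qed.

Lemma rsum_le n F G : (forall k, (k <= n)%nat -> F k <= G k) -> rsum n F <= rsum n G.
Proof. induction n; simpl; intros H. apply H; lia. apply Rplus_le_compat. apply IHn; intros; apply H; lia.
  apply H; lia. Qed.

Lemma rsum_scal n F a : rsum n (fun k => F k * a) = rsum n F * a.
Proof. induction n; simpl; auto. rewrite IHn. ring. Qed.

Lemma rsum_ge0 n F : (forall k, 0 <= F k) -> 0 <= rsum n F.
Proof. induction n; simpl; intros H. apply H. pose proof (H (S n)). pose proof (IHn H). lra. Qed.

Lemma Cmod_monomial u nu mu : Cmod (Cmult (Cpow u nu) (Cpow (Cconj u) mu)) = Cmod u ^ (nu + mu).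
Proof. rewrite Cmod_mult, !Cmod_pow, Cmod_conj, pow_add. auto. Qed.

Definition coef_norm_sum (c : nat -> nat -> C) N := rsum N (fun nu => rsum N (fun mu => Cmod (c nu mu))).

Lemma coef_norm_sum_ge0 c N : 0 <= coef_norm_sum c N.
Proof. unfold coef_norm_sum. apply rsum_ge0. intro. apply rsum_ge0. intro. apply Cmod_ge_0. Qed.

Lemma feval_sub_fhom c N l u : Cminus (feval c N u) (fhom c N l u) =
  csum N (fun nu => csum N (fun mu => if Nat.eqb (nu + mu) l then RtoC 0
     else Cmult (c nu mu) (Cmult (Cpow u nu) (Cpow (Cconj u) mu)))).
Proof.
  unfold feval, fhom. rewrite csum_minus. f_equal. apply functional_extensionality. intro nu.
  rewrite csum_minus. f_equal. apply functional_extensionality. intro mu.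
  destruct (Nat.eqb (nu + mu) l); ring.
Qed.



Lemma pow_le_antimono x m n : 0 <= x <= 1 -> (m <= n)%nat -> x ^ n <= x ^ m.
Proof.
  intros Hx Hmn. induction Hmn. lra. simpl. pose proof (pow_le x m0 ltac:(lra)). nra.
Qed.

Lemma feval_sub_top_bound c N d u : mixed_supported c N -> is_top_degree c d -> 1 <= Cmod u ->
  Cmod (Cminus (feval c N u) (fhom c N d u)) * Cmod u <= coef_norm_sum c N * Cmod u ^ d.
Proof.
  intros Hs [_ Htop] Hu. rewrite feval_sub_fhom. unfold coef_norm_sum. rewrite <- rsum_scal.
  eapply Rle_trans. apply Rmult_le_compat_r. lra. apply Cmod_csum. rewrite <- rsum_scal.
  apply rsum_le. intros nu Hnu.
  eapply Rle_trans. apply Rmult_le_compat_r. lra. apply Cmod_csum. rewrite <- !rsum_scal.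
  apply rsum_le. intros mu Hmu.
  destruct (Nat.eqb (nu + mu) d) eqn:E.
  - rewrite Cmod_0. pose proof (Cmod_ge_0 (c nu mu)). pose proof (pow_le (Cmod u) d ltac:(lra)). nra.
  - rewrite Cmod_mult, Cmod_monomial. destruct (Ceq_dec (c nu mu) (RtoC 0)) as [Z0|NZ].
    + rewrite Z0, Cmod_0. lra.
    + pose proof (Htop nu mu NZ). apply Nat.eqb_neq in E.
      assert (Cmod u ^ (nu + mu) * Cmod u <= Cmod u ^ d).
      { replace (Cmod u ^ (nu + mu) * Cmod u) with (Cmod u ^ S (nu + mu)) by (simpl; ring).
        apply Rle_pow; auto. lia. }
      pose proof (Cmod_ge_0 (c nu mu)). rewrite Rmult_assoc. apply Rmult_le_compat_l; auto.
Qed.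

Lemma feval_sub_bottom_bound c N d u : mixed_supported c N -> is_bottom_degree c d -> Cmod u <= 1 ->
  Cmod (Cminus (feval c N u) (fhom c N d u)) <= coef_norm_sum c N * Cmod u ^ (S d).
Proof.
  intros Hs [_ Hbot] Hu. pose proof (Cmod_ge_0 u). rewrite feval_sub_fhom. unfold coef_norm_sum.
    rewrite <- rsum_scal.
  eapply Rle_trans. apply Cmod_csum.
  apply rsum_le. intros nu Hnu.
  eapply Rle_trans. apply Cmod_csum. rewrite <- !rsum_scal.
  apply rsum_le. intros mu Hmu.
  destruct (Nat.eqb (nu + mu) d) eqn:E.
  - rewrite Cmod_0. pose proof (Cmod_ge_0 (c nu mu)). pose proof (pow_le (Cmod u) (S d) ltac:(lra)). nra.
  - rewrite Cmod_mult, Cmod_monomial. destruct (Ceq_dec (c nu mu) (RtoC 0)) as [Z0|NZ].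
    + rewrite Z0, Cmod_0. pose proof (pow_le (Cmod u) (S d) ltac:(lra)). lra.
    + pose proof (Hbot nu mu NZ). apply Nat.eqb_neq in E.
      assert (Cmod u ^ (nu + mu) <= Cmod u ^ S d) by (apply pow_le_antimono; [lra|lia]).
      pose proof (Cmod_ge_0 (c nu mu)). apply Rmult_le_compat_l; auto.
Qed.

Lemma Cmod_add_ge_sub (a b : C) : Cmod a - Cmod b <= Cmod (Cplus a b).
Proof. pose proof (Cmod_triangle (Cplus a b) (Copp b)).
  replace (Cplus (Cplus a b) (Copp b)) with a in H by ring.
  rewrite Cmod_opp in H. lra. Qed.

Lemma Cmod_linear_factor_lower (g u : C) : Rabs (1 - Cmod g) * Cmod u <= Cmod (Cplus u (Cmult g (Cconj u))).
Proof.
  pose proof (Cmod_add_ge_sub u (Cmult g (Cconj u))). pose proof (Cmod_add_ge_sub (Cmult g (Cconj u)) u).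
  rewrite Cplus_comm in H0. rewrite Cmod_mult, Cmod_conj in H, H0.
  pose proof (Cmod_ge_0 u). unfold Rabs; destruct Rcase_abs; nra.
Qed.

Definition fac_lower_const (fac : list (C * nat)%type) : R :=
  fold_right (fun gn acc => Rabs (1 - Cmod (fst gn)) ^ snd gn * acc) 1 fac.
Definition fac_degree (fac : list (C * nat)%type) : nat :=
  fold_right (fun gn acc => (snd gn + acc)%nat) 0%nat fac.

Definition fac_product (fac : list (C * nat)%type) (u : C) : C :=
  fold_right (fun gn acc => Cmult (Cpow (Cplus u (Cmult (fst gn) (Cconj u))) (snd gn)) acc) (RtoC 1) fac.

Lemma fac_lower_const_pos fac : admissible_fac fac -> 0 < fac_lower_const fac.
Proof.
  induction fac as [|[g n] fac IH]; simpl; intros H. lra.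
  inversion H as [|? ? Hg Hr]; subst. simpl in Hg. apply Rmult_lt_0_compat; auto.
  apply pow_lt. apply Rabs_pos_lt. lra.
Qed.

Lemma fac_lower_const_ge0 fac : 0 <= fac_lower_const fac.
Proof. induction fac as [|[g n] fac IH]; simpl. lra. apply Rmult_le_pos; auto. apply pow_le, Rabs_pos. Qed.

Lemma Cmod_fac_product_lower fac u : fac_lower_const fac * Cmod u ^ fac_degree fac <= Cmod
  (fac_product fac u).
Proof.
  induction fac as [|[g n] fac IH]; simpl.
  - rewrite Cmod_1. lra.
  - unfold fac_product in IH. rewrite Cmod_mult, Cmod_pow. rewrite pow_add.
    pose proof (Cmod_linear_factor_lower g u). pose proof (Cmod_ge_0 u).
    assert (0 <= Rabs (1 - Cmod g) * Cmod u) by (pose proof (Rabs_pos (1 - Cmod g)); nra).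
    assert ((Rabs (1 - Cmod g) * Cmod u) ^ n <= Cmod (Cplus u (Cmult g (Cconj u))) ^ n) by (apply pow_incr;
      lra).
    rewrite Rpow_mult_distr in H2.
    assert (0 <= fac_lower_const fac * Cmod u ^ fac_degree fac).
    { apply Rmult_le_pos. apply fac_lower_const_ge0. apply pow_le; auto. }
    pose proof (pow_le (Rabs (1 - Cmod g)) n (Rabs_pos _)). pose proof (pow_le (Cmod u) n H0).
    pose proof (Cmod_ge_0 (fac_product fac u)).
    apply Rle_trans with ((Rabs (1 - Cmod g) ^ n * Cmod u ^ n) *
      (fac_lower_const fac * Cmod u ^ fac_degree fac)). right; ring.
    apply Rmult_le_compat; auto. apply Rmult_le_pos; auto.
Qed.

Lemma factored_eq k p q fac u :
  factored k p q fac u = Cmult (Cmult k (Cmult (Cpow u p) (Cpow (Cconj u) q))) (fac_product fac u).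
Proof. reflexivity. Qed.

Lemma Cmod_factored_lower k p q fac u :
  Cmod k * fac_lower_const fac * Cmod u ^ (p + q + fac_degree fac) <= Cmod (factored k p q fac u).
Proof.
  rewrite factored_eq, !Cmod_mult, !Cmod_pow, Cmod_conj, !pow_add.
  pose proof (Cmod_fac_product_lower fac u). pose proof (Cmod_ge_0 k). pose proof (Cmod_ge_0 u).
  pose proof (pow_le (Cmod u) p H1). pose proof (pow_le (Cmod u) q H1).
  apply Rle_trans with ((Cmod k * (Cmod u ^ p * Cmod u ^ q)) *
    (fac_lower_const fac * Cmod u ^ fac_degree fac)). right; ring.
  apply Rmult_le_compat_l. apply Rmult_le_pos; auto. apply Rmult_le_pos; auto. auto.
Qed.

Lemma csum_scal n (F : nat -> C) a : csum n (fun k => Cmult a (F k)) = Cmult a (csum n F).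
Proof. induction n; simpl; auto. rewrite IHn. ring. Qed.

Lemma Cpow_RtoC x n : Cpow (RtoC x) n = RtoC (x ^ n).
Proof. induction n; simpl; auto. rewrite IHn. apply C_ext; simpl; ring. Qed.

Lemma Cconj_RtoC x : Cconj (RtoC x) = RtoC x.
Proof. apply C_ext; simpl; ring. Qed.

Lemma fhom_real_homogeneous c N l x : fhom c N l (RtoC x) = Cmult (RtoC (x ^ l)) (fhom c N l (RtoC 1)).
Proof.
  unfold fhom. rewrite <- csum_scal. f_equal. apply functional_extensionality. intro nu.
  rewrite <- csum_scal. f_equal. apply functional_extensionality. intro mu.
  destruct (Nat.eqb (nu + mu) l) eqn:E.
  - apply Nat.eqb_eq in E. rewrite !Cconj_RtoC, !Cpow_RtoC. rewrite <- E, pow_add.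
    rewrite !pow1. apply C_ext; simpl; ring.
  - apply C_ext; simpl; ring.
Qed.

Lemma fac_product_cons g n fac u : fac_product ((g,
  n) :: fac) u = Cmult (Cpow (Cplus u (Cmult g (Cconj u))) n) (fac_product fac u).
Proof. reflexivity. Qed.

Lemma fac_product_real_homogeneous fac x : fac_product fac (RtoC x) = Cmult (RtoC (x ^ fac_degree fac))
  (fac_product fac (RtoC 1)).
Proof.
  induction fac as [|[g n] fac IH].
  - simpl. apply C_ext; simpl; ring.
  - rewrite !fac_product_cons, IH. cbn [fac_degree fold_right snd]. fold (fac_degree fac).
    rewrite !Cconj_RtoC.
    replace (Cplus (RtoC x) (Cmult g (RtoC x)))
      with (Cmult (RtoC x) (Cplus (RtoC 1) (Cmult g (RtoC 1)))) by ring.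
    rewrite Cpow_mult_l, Cpow_RtoC, pow_add. replace (RtoC (x ^ n * x ^ fac_degree fac)) with
      (Cmult (RtoC (x ^ n)) (RtoC (x ^ fac_degree fac))) by (apply C_ext; simpl; ring). ring.
Qed.

Lemma factored_real_homogeneous k p q fac x :
  factored k p q fac (RtoC x) = Cmult (RtoC (x ^ (p + q + fac_degree fac))) (factored k p q fac (RtoC 1)).
Proof.
  rewrite !factored_eq, fac_product_real_homogeneous, !Cconj_RtoC, !Cpow_RtoC, !pow_add, !pow1.
  replace (RtoC (x ^ p * x ^ q * x ^ fac_degree fac)) with
      (Cmult (Cmult (RtoC (x ^ p)) (RtoC (x ^ q))) (RtoC (x ^ fac_degree fac))) by (apply C_ext; simpl;
        ring).
  apply C_ext; simpl; ring.
Qed.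

Lemma pow2_inj m n : 2 ^ m = 2 ^ n -> m = n.
Proof.
  intros H. destruct (Nat.lt_trichotomy m n) as [Hl|[He|Hg]]; auto.
  - pose proof (Rlt_pow 2 m n ltac:(lra) Hl). lra.
  - pose proof (Rlt_pow 2 n m ltac:(lra) Hg). lra.
Qed.

Lemma factored_degree c N l k p q fac : (forall u, fhom c N l u = factored k p q fac u) ->
  k <> RtoC 0 -> admissible_fac fac -> l = (p + q + fac_degree fac)%nat.
Proof.
  intros Heq Hk Had.
  set (X := factored k p q fac (RtoC 1)).
  assert (HX : X <> RtoC 0).
  { intro E. pose proof (Cmod_factored_lower k p q fac (RtoC 1)). fold X in H.
    rewrite E, Cmod_1, Cmod_0, pow1 in H.
    pose proof (fac_lower_const_pos fac Had). assert (0 < Cmod k) by (apply Cmod_gt_0; auto). nra. }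
  pose proof (fhom_real_homogeneous c N l 2). rewrite !Heq, factored_real_homogeneous in H. fold X in H.
  apply (f_equal Cmod) in H. rewrite !Cmod_mult, !Cmod_R in H.
  assert (0 < Cmod X) by (apply Cmod_gt_0; auto).
  rewrite !Rabs_right in H by (apply Rle_ge, pow_le; lra).
  apply pow2_inj. apply Rmult_eq_reg_r with (Cmod X); lra.
Qed.

Lemma two_PI_IZR_inj a b : 2 * PI * IZR a = 2 * PI * IZR b -> a = b.
Proof. intros H. pose proof PI_RGT_0. apply eq_IZR. nra. Qed.

(** * The two index formulas *)

Lemma Cmod_fhom_lower c N d k p q fac : (forall u, fhom c N d u = factored k p q fac u) ->
  k <> RtoC 0 -> admissible_fac fac ->
  forall u, Cmod k * fac_lower_const fac * Cmod u ^ d <= Cmod (fhom c N d u).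
Proof.
  intros Hfac Hk Had u. rewrite Hfac, (factored_degree c N d k p q fac Hfac Hk Had).
  apply Cmod_factored_lower.
Qed.

Lemma fac_lower_const_scale_pos k fac : k <> RtoC 0 -> admissible_fac fac ->
  0 < Cmod k * fac_lower_const fac.
Proof.
  intros Hk Had. apply Rmult_lt_0_compat; [apply Cmod_gt_0; auto | apply fac_lower_const_pos; auto].
Qed.

Lemma feval_near_fhom_top c N d m u : mixed_supported c N -> is_top_degree c d ->
  (forall u, m * Cmod u ^ d <= Cmod (fhom c N d u)) -> 1 <= Cmod u ->
  coef_norm_sum c N < m * Cmod u ->
  Cmod (Cminus (feval c N u) (fhom c N d u)) < Cmod (fhom c N d u).
Proof.
  intros Hc Htop Hlow Hu Hlt.
  pose proof (feval_sub_top_bound c N d u Hc Htop Hu). pose proof (Hlow u).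
  pose proof (pow_lt (Cmod u) d ltac:(lra)).
  assert (Cmod (Cminus (feval c N u) (fhom c N d u)) * Cmod u < Cmod (fhom c N d u) * Cmod u).
  { eapply Rle_lt_trans. apply H. apply Rlt_le_trans with (m * Cmod u * Cmod u ^ d); nra. }
  nra.
Qed.

Lemma feval_near_fhom_bottom c N d m u : mixed_supported c N -> is_bottom_degree c d ->
  (forall u, m * Cmod u ^ d <= Cmod (fhom c N d u)) -> 0 < Cmod u <= 1 ->
  coef_norm_sum c N * Cmod u < m ->
  Cmod (Cminus (feval c N u) (fhom c N d u)) < Cmod (fhom c N d u).
Proof.
  intros Hc Hbot Hlow Hu Hlt.
  pose proof (feval_sub_bottom_bound c N d u Hc Hbot ltac:(lra)). pose proof (Hlow u).
  pose proof (pow_lt (Cmod u) d ltac:(lra)). simpl in H. nra.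
Qed.

Lemma is_arg_var_circ_rouche f g a r x : locally_lipschitz f -> locally_lipschitz g ->
  is_arg_var (fun t => g (circ a r t)) 0 1 x ->
  (forall t, 0 <= t <= 1 ->
     Cmod (Cminus (f (circ a r t)) (g (circ a r t))) < Cmod (g (circ a r t))) ->
  is_arg_var (fun t => f (circ a r t)) 0 1 x.
Proof.
  intros Hf Hg Hx Hr. apply is_arg_var_rouche_loop with (fun t => g (circ a r t)); auto.
  - apply comp_circ_ccontinuous; auto.
  - apply comp_circ_ccontinuous; auto.
  - rewrite circ_closed; auto.
  - rewrite circ_closed; auto.
Qed.

Lemma rect_arg_factored_square g k p q fac R : locally_lipschitz g ->
  (forall u, g u = factored k p q fac u) -> k <> RtoC 0 -> admissible_fac fac -> 0 < R ->
  rect_arg g (0 - R) (0 + R) (0 - R) (0 + R) = 2 * PI * IZR (index_of_fac p q fac).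
Proof.
  intros Hg Hfac Hk Had HR.
  assert (Hiso : isolated_in_square g (RtoC 0) R).
  { intros x y _ _ Hne E. pose proof (Cmod_factored_lower k p q fac (x, y)).
    rewrite <- Hfac, E, Cmod_0 in H. pose proof (fac_lower_const_scale_pos k fac Hk Had).
    assert (0 < Cmod (x, y)) by (apply Cmod_gt_0; auto).
    pose proof (pow_lt (Cmod (x, y)) (p + q + fac_degree fac) H1). nra. }
  pose proof (is_arg_var_circle_isolated g (RtoC 0) R R Hg ltac:(lra) Hiso) as A. cbn [fst snd RtoC] in A.
  apply (is_arg_var_uniq _ _ _ _ _ A).
  apply is_arg_var_ext with (fun t => factored k p q fac (circ (RtoC 0) R t)).
  - apply is_arg_var_factored; auto.
  - intros t _. rewrite Hfac. auto.
Qed.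

Lemma R_le_Cmod_square_boundary R x y : 0 <= R ->
  (x = 0 - R \/ x = 0 + R \/ y = 0 - R \/ y = 0 + R) -> R <= Cmod (x, y).
Proof.
  intros HR Hb. pose proof (Rabs_fst_le_Cmod (x, y)). pose proof (Rabs_snd_le_Cmod (x, y)).
  assert (Rabs (0 - R) = R) by (rewrite Rabs_left1; lra).
  assert (Rabs (0 + R) = R) by (rewrite Rabs_right; lra).
  cbn [fst snd] in *. destruct Hb as [E|[E|[E|E]]]; rewrite E in *; lra.
Qed.

Definition sum_Cmod (V : list C) : R := fold_right (fun z acc => Cmod z + acc) 0 V.

Lemma sum_Cmod_ge0 V : 0 <= sum_Cmod V.
Proof. induction V; simpl. lra. pose proof (Cmod_ge_0 a). lra. Qed.

Lemma sum_Cmod_In V z : In z V -> Cmod z <= sum_Cmod V.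
Proof. induction V; simpl; intros H. contradiction. pose proof (sum_Cmod_ge0 V). pose proof (Cmod_ge_0 a).
  destruct H. subst; lra. specialize (IHV H). lra. Qed.

(* All zeros lie inside a square so large that the top-degree part dominates
   on its boundary; count there, then compare with f_dbar by Rouché. *)
Theorem SM_eq_index_at_infinity c N dbar p q k fac V : mixed_supported c N ->
  is_top_degree c dbar -> valid_factorization k fac ->
  (forall u, fhom c N dbar u = factored k p q fac u) -> admissible_fac fac ->
  NoDup V -> (forall z, feval c N z = RtoC 0 <-> In z V) ->
  SM (feval c N) V = index_of_fac p q fac.
Proof.
  intros Hc Htop [Hk _] Hfac Had Hnd HV.
  set (m := Cmod k * fac_lower_const fac).
  assert (Hm : 0 < m) by (apply fac_lower_const_scale_pos; auto).
  pose proof (Cmod_fhom_lower c N dbar k p q fac Hfac Hk Had) as Hlow. fold m in Hlow.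
  set (S := coef_norm_sum c N). pose proof (coef_norm_sum_ge0 c N) as HS. fold S in HS.
  set (R := 1 + S / m + sum_Cmod V).
  assert (HSm : 0 <= S / m) by (apply Rdiv_le_0_compat; lra).
  assert (HR1 : 1 <= R) by (pose proof (sum_Cmod_ge0 V); unfold R; lra).
  assert (HSR : S < m * R) by (unfold R; pose proof (sum_Cmod_ge0 V);
    assert (m * (S / m) = S) by (field; lra); nra).
  set (f := feval c N). set (g := fhom c N dbar).
  assert (Hdom : forall u, R <= Cmod u -> Cmod (Cminus (f u) (g u)) < Cmod (g u)).
  { intros u Hu. apply (feval_near_fhom_top c N dbar m); auto. lra. fold S. nra. }
  assert (Hcount : rect_arg f (0 - R) (0 + R) (0 - R) (0 + R) = 2 * PI * IZR (SM f V)).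
  { apply (rect_arg_counts_all f (locally_lipschitz_feval c N) (length V)); auto; try lra.
    - intros x y _ _ E. apply HV. auto.
    - intros z Hz. pose proof (sum_Cmod_In V z Hz). pose proof (Rabs_fst_le_Cmod z).
      pose proof (Rabs_snd_le_Cmod z). unfold R in *.
      unfold Rabs in *. destruct (Rcase_abs (fst z)), (Rcase_abs (snd z)); lra. }
  assert (Hrouche : rect_arg f (0 - R) (0 + R) (0 - R) (0 + R) = rect_arg g (0 - R) (0 + R) (0 - R)
    (0 + R)).
  { apply rect_arg_rouche; try apply locally_lipschitz_feval; try apply locally_lipschitz_fhom; try lra.
    - intros x y _ _ Hb E. pose proof (Hdom (x, y) (R_le_Cmod_square_boundary R x y ltac:(lra) Hb)).
      rewrite E, Cmod_0 in H. pose proof (Cmod_ge_0 (Cminus (f (x, y)) (RtoC 0))). lra.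
    - intros x y _ _ Hb. apply Hdom, R_le_Cmod_square_boundary; auto; lra. }
  apply two_PI_IZR_inj. rewrite <- Hcount, Hrouche.
  apply (rect_arg_factored_square g k p q fac R (locally_lipschitz_fhom c N dbar) Hfac Hk Had); lra.
Qed.

(* On small circles the bottom-degree part dominates, and its degree is read
   off the factorization. *)
Theorem sm_origin_eq_index c N dlow a b k fac : mixed_supported c N ->
  is_bottom_degree c dlow -> valid_factorization k fac ->
  (forall u, fhom c N dlow u = factored k a b fac u) -> admissible_fac fac ->
  sm (feval c N) (RtoC 0) = index_of_fac a b fac.
Proof.
  intros Hc Hbot [Hk _] Hfac Had.
  set (m := Cmod k * fac_lower_const fac).
  assert (Hm : 0 < m) by (apply fac_lower_const_scale_pos; auto).
  pose proof (Cmod_fhom_lower c N dlow k a b fac Hfac Hk Had) as Hlow. fold m in Hlow.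
  set (S := coef_norm_sum c N). pose proof (coef_norm_sum_ge0 c N) as HS. fold S in HS.
  apply sm_eq. exists (Rmin 1 (m / (S + 1))). split.
  { apply Rmin_pos. lra. apply Rdiv_lt_0_compat; lra. }
  intros r Hr. pose proof (Rmin_l 1 (m / (S + 1))). pose proof (Rmin_r 1 (m / (S + 1))).
  assert (HSr : S * r < m).
  { apply Rle_lt_trans with ((S + 1) * r). nra.
    apply Rmult_lt_reg_r with (/ (S + 1)). apply Rinv_0_lt_compat; lra.
    replace ((S + 1) * r * / (S + 1)) with r by (field; lra). unfold Rdiv in H0. lra. }
  apply circle_degree_of_is_arg_var.
  apply (is_arg_var_circ_rouche _ (fhom c N dlow)); try apply locally_lipschitz_feval;
    try apply locally_lipschitz_fhom.
  - apply is_arg_var_ext with (fun t => factored k a b fac (circ (RtoC 0) r t)).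
    + apply is_arg_var_factored; auto. lra.
    + intros t _. rewrite Hfac. auto.
  - intros t _. assert (Hu : Cmod (circ (RtoC 0) r t) = r) by (apply Cmod_circ_origin; lra).
    apply (feval_near_fhom_bottom c N dlow m); auto; rewrite Hu; fold S; lra.
Qed.

Theorem theorem12 (c : nat -> nat -> C) (N : nat) (Hc : mixed_supported c N) :
  (* (1) *)
  (forall (dbar p q : nat) (k : C) (fac : list (C * nat)%type),
     is_top_degree c dbar ->
     valid_factorization k fac ->
     (forall u, fhom c N dbar u = factored k p q fac u) ->
     admissible_fac fac ->
     forall V : list C, NoDup V ->
       (forall z, feval c N z = RtoC 0 <-> In z V) ->
       SM (feval c N) V = index_of_fac p q fac) /\
  (* (2) *)
  (forall (dlow a b : nat) (k : C) (fac : list (C * nat)%type),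
     is_bottom_degree c dlow ->
     valid_factorization k fac ->
     (forall u, fhom c N dlow u = factored k a b fac u) ->
     admissible_fac fac ->
     feval c N (RtoC 0) = RtoC 0 ->
     sm (feval c N) (RtoC 0) = index_of_fac a b fac).
Proof.
  split.
  - intros dbar p q k fac Htop Hval Hfac Had V Hnd HV.
    exact (SM_eq_index_at_infinity c N dbar p q k fac V Hc Htop Hval Hfac Had Hnd HV).
  - intros dlow a b k fac Hbot Hval Hfac Had _.
    exact (sm_origin_eq_index c N dlow a b k fac Hc Hbot Hval Hfac Had).
Qed.
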